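(* Every ordinal space is homeomorphic to one of the following ordinal spaces: (1) $\emptyset$ or $k$; (2) $\omega^\alpha\cdot k+1$; (3) $\omega^\alpha\cdot k$; (4) $\omega^\alpha\cdot k+\omega^\beta$; where $k$ is a nonzero natural number, $\alpha$ is a nonzero ordinal and, in case (4), $\beta$ is a nonzero ordinal with $\beta<\alpha$. Moreover, this list has no redundancy: no space in one of these four families is homeomorphic to a space in another family, and within each family, distinct parameter values ($k$, $\alpha$, $\beta$) give non-homeomorphic spaces.
   Context: An ordinal space is an ordinal $\gamma=\{\delta:\delta<\gamma\}$ endowed with its order topology. Ordinal arithmetic (addition, multiplication, exponentiation) is the standard one, continuous in the right argument. *)

(* Ordinals are represented as well-ordered types
   (ordinals up to order isomorphism); the ordinal space of an ordinal
   is its order topology. *)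
From Stdlib Require Import List Arith.

Record LO := mkLO { car :> Type; lt : car -> car -> Prop }.
Arguments lt {l} _ _.

Definition is_ordinal (L : LO) : Prop :=
  (forall x : L, ~ lt x x) /\
  (forall x y z : L, lt x y -> lt y z -> lt x z) /\
  (forall x y : L, lt x y \/ x = y \/ lt y x) /\
  well_founded (@lt L).

Definition ord_iso (X Y : LO) : Prop :=
  exists (f : X -> Y) (g : Y -> X),
    (forall x, g (f x) = x) /\ (forall y, f (g y) = y) /\
    (forall x x' : X, lt x x' <-> lt (f x) (f x')).

Definition segment (X : LO) (a : X) : LO :=
  @mkLO {x : X | lt x a} (fun x y => lt (proj1_sig x) (proj1_sig y)).

Definition ord_lt (B A : LO) : Prop := exists a : A, ord_iso B (segment A a).

Definition nonzero (A : LO) : Prop := inhabited (car A).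

Definition fin (n : nat) : LO :=
  @mkLO {i : nat | i < n} (fun i j => proj1_sig i < proj1_sig j).

(* omega ^ alpha : finitely supported functions alpha -> omega, ordered by
   the value at the largest point where they differ *)
Definition opow_car (A : LO) : Type :=
  {f : A -> nat | exists l : list A, forall x, f x <> 0 -> In x l}.

Definition omega_pow (A : LO) : LO :=
  @mkLO (opow_car A)
    (fun f g => exists x : A, proj1_sig f x < proj1_sig g x /\
        forall y : A, lt x y -> proj1_sig f y = proj1_sig g y).

Definition mul_nat (L : LO) (k : nat) : LO :=
  @mkLO (fin k * L)%type
    (fun p q => proj1_sig (fst p) < proj1_sig (fst q) \/
                (proj1_sig (fst p) = proj1_sig (fst q) /\ lt (snd p) (snd q))).

Definition succ (L : LO) : LO :=
  @mkLO (option L)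
    (fun p q => match p, q with
                | Some x, Some y => lt x y
                | Some _, None => True
                | _, _ => False end).

Definition osum (L M : LO) : LO :=
  @mkLO (L + M)%type
    (fun p q => match p, q with
                | inl x, inl y => lt x y
                | inr x, inr y => lt x y
                | inl _, inr _ => True
                | inr _, inl _ => False end).

Definition in_interval (X : LO) (lo hi : option X) (y : X) : Prop :=
  match lo with None => True | Some a => lt a y end /\
  match hi with None => True | Some b => lt y b end.

Definition ord_open (X : LO) (U : X -> Prop) : Prop :=
  forall x, U x -> exists lo hi : option X,
    in_interval X lo hi x /\ forall y, in_interval X lo hi y -> U y.

Definition ord_continuous (X Y : LO) (f : X -> Y) : Prop :=
  forall V : Y -> Prop, ord_open Y V -> ord_open X (fun x => V (f x)).

Definition homeomorphic (X Y : LO) : Prop :=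
  exists (f : X -> Y) (g : Y -> X),
    (forall x, g (f x) = x) /\ (forall y, f (g y) = y) /\
    ord_continuous X Y f /\ ord_continuous Y X g.

Inductive code : Type :=
  | Fam1 (n : nat)
  | Fam2 (k : nat) (A : LO)
  | Fam3 (k : nat) (A : LO)
  | Fam4 (k : nat) (A B : LO).

Definition valid (c : code) : Prop :=
  match c with
  | Fam1 _ => True
  | Fam2 k A | Fam3 k A => 0 < k /\ is_ordinal A /\ nonzero A
  | Fam4 k A B => 0 < k /\ is_ordinal A /\ nonzero A /\
                  is_ordinal B /\ nonzero B /\ ord_lt B A
  end.

Definition space (c : code) : LO :=
  match c with
  | Fam1 n => fin n
  | Fam2 k A => succ (mul_nat (omega_pow A) k)
  | Fam3 k A => mul_nat (omega_pow A) k
  | Fam4 k A B => osum (mul_nat (omega_pow A) k) (omega_pow B)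
  end.

Definition same_params (c d : code) : Prop :=
  match c, d with
  | Fam1 n, Fam1 m => n = m
  | Fam2 k A, Fam2 k' A' => k = k' /\ ord_iso A A'
  | Fam3 k A, Fam3 k' A' => k = k' /\ ord_iso A A'
  | Fam4 k A B, Fam4 k' A' B' => k = k' /\ ord_iso A A' /\ ord_iso B B'
  | _, _ => False
  end.

From Stdlib Require Import List Arith Lia Classical ClassicalEpsilon FunctionalExtensionality ProofIrrelevance Wellfounded FinFun.
Import ListNotations.

(* Every ordinal G embeds into omega^G by x |-> omega^x, so G is order isomorphic
   to omega^G or to an initial segment [0, g) of it.  Let omega^a * k be the leading
   term of g and omega^m its last one.  If g is finite, so is [0, g); if m = a,
   [0, g) is omega^a * k.  Otherwise write g = h + omega^m: the compact clopen
   interval (omega^a * k, h] can be moved in front of [0, omega^a * k], which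
   absorbs it, and (h, g) is order isomorphic to (omega^a * k, omega^a * k + omega^m).
   Hence [0, g) is homeomorphic to omega^a * k + omega^m, of family (2) if m = 0
   and of family (4) otherwise.

   For uniqueness, every space of the families (2)-(4) is an initial segment of
   omega^(A + 1), in which the Cantor-Bendixson rank of a point is its least
   exponent.  A homeomorphism preserves the order of ranks, hence compactness, the
   number of points of the top rank A, the order type A of the ranks below it, and
   the least rank beta such that the points of rank at least beta form a bounded
   set; these invariants tell all the listed spaces apart. *)

Set Implicit Arguments.

(** * Well-orders and their isomorphisms *)

Definition le {X : LO} (x y : X) : Prop := lt x y \/ x = y.

Section WellOrder.
Variable X : LO.
Hypothesis HX : is_ordinal X.

Lemma wo_irrefl (x : X) : ~ lt x x.
Proof. destruct HX as [H _]; auto. Qed.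
Lemma wo_trans {x y z : X} : lt x y -> lt y z -> lt x z.
Proof. destruct HX as [_ [H _]]; eauto. Qed.
Lemma wo_trichotomy (x y : X) : lt x y \/ x = y \/ lt y x.
Proof. destruct HX as [_ [_ [H _]]]; auto. Qed.
Lemma wo_wf : well_founded (@lt X).
Proof. destruct HX as [_ [_ [_ H]]]; auto. Qed.

Lemma wo_lt_neq {x y : X} : lt x y -> x <> y.
Proof. intros h e. subst. exact (wo_irrefl y h). Qed.

Lemma wo_gt_neq {x y : X} : lt x y -> y <> x.
Proof. intros h e. subst. exact (wo_irrefl x h). Qed.

Lemma wo_asym {x y : X} : lt x y -> ~ lt y x.
Proof. intros H1 H2. apply (wo_irrefl x). eapply wo_trans; eauto. Qed.

Lemma wo_not_lt_le {x y : X} : ~ lt x y -> le y x.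
Proof. intros H. destruct (wo_trichotomy x y) as [h|[h|h]]; unfold le; auto. tauto. Qed.

Lemma wo_le_not_lt {x y : X} : le y x -> ~ lt x y.
Proof. intros [h|h] h2. - apply (wo_asym h h2). - subst. apply (wo_irrefl _ h2). Qed.

Lemma wo_le_trans {x y z : X} : le x y -> le y z -> le x z.
Proof. unfold le; intros [h|h] [h'|h']; subst; eauto using wo_trans. Qed.

Lemma wo_lt_le_trans {x y z : X} : lt x y -> le y z -> lt x z.
Proof. intros h [h'|h']; subst; eauto using wo_trans. Qed.

Lemma wo_le_lt_trans {x y z : X} : le x y -> lt y z -> lt x z.
Proof. intros [h|h] h'; subst; eauto using wo_trans. Qed.

Lemma wo_least (P : X -> Prop) : (exists x, P x) -> exists m, P m /\ forall y, P y -> ~ lt y m.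
Proof.
  intros [x Hx]. apply NNPP; intro Hn.
  assert (forall z, ~ P z).
  { intro z. induction z as [z IH] using (well_founded_ind wo_wf).
    intro Pz. apply Hn. exists z. split; auto. intros y Py Hy. exact (IH y Hy Py). }
  exact (H x Hx).
Qed.

Lemma wo_greatest_finite (P : X -> Prop) (l : list X) :
  (forall x, P x -> In x l) -> (exists x, P x) -> exists m, P m /\ forall y, P y -> le y m.
Proof.
  revert P; induction l as [|a l IH]; intros P Hl [x Hx].
  - destruct (Hl x Hx).
  - destruct (classic (exists y, P y /\ y <> a)) as [[y [Py Hya]]|Hn].
    + destruct (IH (fun z => P z /\ z <> a)) as [m [[Pm Hma] Hm]].
      { intros z [Pz Hz]. destruct (Hl z Pz); auto. congruence. }
      { eauto. }
      destruct (classic (P a)) as [Pa|nPa].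
      * destruct (wo_trichotomy m a) as [h|[h|h]].
        -- exists a. split; auto. intros z Pz. destruct (classic (z = a)) as [->|hz].
           ++ right; auto.
           ++ left. apply (wo_le_lt_trans (Hm z (conj Pz hz)) h).
        -- congruence.
        -- exists m. split; auto. intros z Pz. destruct (classic (z = a)) as [->|hz].
           ++ left; auto.
           ++ apply Hm; auto.
      * exists m. split; auto. intros z Pz. apply Hm. split; auto. intro; subst; auto.
    + exists a. assert (Pa : P a).
      { destruct (classic (x = a)) as [<-|h]; auto. exfalso; eauto. }
      split; auto. intros z Pz. right. apply NNPP; intro h. eauto.
Qed.

End WellOrder.

Arguments wo_irrefl {X} HX x.
Arguments wo_trans {X} HX {x y z}.
Arguments wo_trichotomy {X} HX x y.
Arguments wo_asym {X} HX {x y}.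
Arguments wo_lt_neq {X} HX {x y}.
Arguments wo_gt_neq {X} HX {x y}.
Arguments wo_not_lt_le {X} HX {x y}.
Arguments wo_le_not_lt {X} HX {x y}.
Arguments wo_le_trans {X} HX {x y z}.
Arguments wo_lt_le_trans {X} HX {x y z}.
Arguments wo_le_lt_trans {X} HX {x y z}.
Arguments wo_least {X} HX P.
Arguments wo_greatest_finite {X} HX P l.
Arguments wo_wf {X} HX.

Lemma iso_refl (X : LO) : ord_iso X X.
Proof. exists (fun x => x), (fun x => x). repeat split; auto. Qed.

Lemma iso_sym (X Y : LO) : ord_iso X Y -> ord_iso Y X.
Proof.
  intros [f [g [H1 [H2 H3]]]]. exists g, f. repeat split; auto.
  - intros h. apply H3. rewrite !H2. auto.
  - intros h. apply H3 in h. rewrite !H2 in h. auto.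
Qed.

Lemma iso_trans (X Y Z : LO) : ord_iso X Y -> ord_iso Y Z -> ord_iso X Z.
Proof.
  intros [f [g [H1 [H2 H3]]]] [f' [g' [H1' [H2' H3']]]].
  exists (fun x => f' (f x)), (fun z => g (g' z)). repeat split.
  - intros x. rewrite H1', H1. auto.
  - intros z. rewrite H2, H2'. auto.
  - intros h. apply H3', H3, h.
  - intros h. apply H3, H3', h.
Qed.

Definition smono {X Y : LO} (f : X -> Y) := forall x y, lt x y -> lt (f x) (f y).

Lemma smono_reflect {X Y : LO} (HX : is_ordinal X) (HY : is_ordinal Y) (f : X -> Y) :
  smono f -> forall x y, lt (f x) (f y) -> lt x y.
Proof.
  intros Hf x y h. destruct (wo_trichotomy HX x y) as [h'|[h'|h']]; auto.
  - subst. destruct (wo_irrefl HY _ h).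
  - destruct (wo_asym HY h (Hf _ _ h')).
Qed.

Lemma smono_inj {X Y : LO} (HX : is_ordinal X) (HY : is_ordinal Y) (f : X -> Y) :
  smono f -> forall x y, f x = f y -> x = y.
Proof.
  intros Hf x y h. destruct (wo_trichotomy HX x y) as [h'|[h'|h']]; auto.
  - apply Hf in h'. rewrite h in h'. destruct (wo_irrefl HY _ h').
  - apply Hf in h'. rewrite h in h'. destruct (wo_irrefl HY _ h').
Qed.

Lemma iso_of_surj {X Y : LO} (HX : is_ordinal X) (HY : is_ordinal Y) (f : X -> Y) :
  smono f -> (forall y, exists x, f x = y) -> ord_iso X Y.
Proof.
  intros Hf Hs.
  set (g := fun y => proj1_sig (constructive_indefinite_description _ (Hs y))).
  assert (Hg : forall y, f (g y) = y).
  { intro y. unfold g. destruct (constructive_indefinite_description _ (Hs y)); auto. }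
  exists f, g. repeat split; auto.
  - intro x. apply (smono_inj HX HY Hf). auto.
  - apply (smono_reflect HX HY Hf).
Qed.

Lemma iso_of_rel (X Y : LO) (HX : is_ordinal X) (HY : is_ordinal Y) (Q : X -> Y -> Prop) :
  (forall x, exists y, Q x y) -> (forall y, exists x, Q x y) ->
  (forall x y x' y', Q x y -> Q x' y' -> (lt x x' <-> lt y y')) -> ord_iso X Y.
Proof.
  intros tot sur mon.
  set (f := fun x => proj1_sig (constructive_indefinite_description _ (tot x))).
  assert (hf : forall x, Q x (f x)).
  { intro x. unfold f. destruct (constructive_indefinite_description _ (tot x)); auto. }
  apply (@iso_of_surj X Y HX HY f).
  - intros x x' h. apply (mon x (f x) x' (f x')); auto.
  - intro y. destruct (sur y) as [x hx]. exists x.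
    destruct (wo_trichotomy HY (f x) y) as [e|[e|e]]; auto; exfalso.
    + apply (wo_irrefl HX x). apply (mon x (f x) x y); auto.
    + apply (wo_irrefl HX x). apply (mon x y x (f x)); auto.
Qed.

Lemma smono_inflationary {X : LO} (HX : is_ordinal X) (k : X -> X) : smono k -> forall x, ~ lt (k x) x.
Proof.
  intros Hk x. induction x as [x IH] using (well_founded_ind (wo_wf HX)).
  intro h. apply (IH (k x) h). apply Hk; auto.
Qed.

Lemma sig_eq {A : Type} {P : A -> Prop} (a b : sig P) : proj1_sig a = proj1_sig b -> a = b.
Proof. destruct a as [a pa], b as [b pb]; simpl; intros ->. f_equal. apply proof_irrelevance. Qed.

Definition sub (X : LO) (P : X -> Prop) : LO :=
  @mkLO {x : X | P x} (fun x y => lt (proj1_sig x) (proj1_sig y)).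

Lemma sub_is_ordinal (X : LO) (P : X -> Prop) : is_ordinal X -> is_ordinal (sub X P).
Proof.
  intros HX. split; [|split; [|split]].
  - intros [x px]; simpl. apply (wo_irrefl HX).
  - intros [x px] [y py] [z pz]; simpl. apply (wo_trans HX).
  - intros [x px] [y py]; simpl. destruct (wo_trichotomy HX x y) as [h|[h|h]]; auto.
    right; left. apply sig_eq; auto.
  - simpl. apply (wf_inverse_image _ _ (@lt X) (fun x : {x : X | P x} => proj1_sig x)). apply (wo_wf HX).
Qed.

Lemma segment_is_ordinal (X : LO) (a : X) : is_ordinal X -> is_ordinal (segment X a).
Proof. intro HX. exact (sub_is_ordinal (fun x => lt x a) HX). Qed.

Section Comparison.
Variables W V : LO.
Hypothesis HW : is_ordinal W.
Hypothesis HV : is_ordinal V.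
Variable f : W -> V.
Hypothesis Hf : smono f.

Definition least_or (P : V -> Prop) (d : V) : V :=
  epsilon (inhabits d) (fun v => P v /\ forall v', P v' -> ~ lt v' v).

Lemma least_or_spec P d : (exists v, P v) -> P (least_or P d) /\ forall v', P v' -> ~ lt v' (least_or P d).
Proof.
  intro H. unfold least_or. apply epsilon_spec. apply (wo_least HV P H).
Qed.

(* [collapse x] is the least point above all [collapse y], y < x; it exists since
   f x is such a point, and the image of [collapse] is downward closed. *)
Definition collapse_step (x : W) (rec : forall y, lt y x -> V) : V :=
  least_or (fun v => forall y (H : lt y x), lt (rec y H) v) (f x).

Definition collapse : W -> V := Fix (wo_wf HW) (fun _ => V) collapse_step.

Lemma collapse_eq x : collapse x = least_or (fun v => forall y, lt y x -> lt (collapse y) v) (f x).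
Proof.
  unfold collapse. rewrite Fix_eq. { reflexivity. }
  intros x0 f1 g1 H. unfold collapse_step.
  assert (f1 = g1) as ->. { extensionality y. extensionality p. auto. }
  reflexivity.
Qed.

Lemma collapse_spec : forall x, le (collapse x) (f x) /\ forall y, lt y x -> lt (collapse y) (collapse x).
Proof.
  intro x. induction x as [x IH] using (well_founded_ind (wo_wf HW)).
  set (P := fun v => forall y, lt y x -> lt (collapse y) v).
  assert (Pf : P (f x)).
  { intros y hy. destruct (IH y hy) as [h1 _]. eapply (wo_le_lt_trans HV h1). apply Hf; auto. }
  destruct (least_or_spec P (f x) (ex_intro _ _ Pf)) as [h1 h2].
  assert (E : least_or P (f x) = collapse x) by (rewrite collapse_eq; reflexivity).
  rewrite E in h1, h2. split; auto.
  apply (wo_not_lt_le HV). apply h2; auto.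
Qed.

Lemma collapse_smono : smono collapse.
Proof. intros x y h. apply (proj2 (collapse_spec y)); auto. Qed.

Lemma collapse_down : forall x v, lt v (collapse x) -> exists y, lt y x /\ collapse y = v.
Proof.
  intro x. induction x as [x IH] using (well_founded_ind (wo_wf HW)).
  intros v hv.
  set (P := fun v => forall y, lt y x -> lt (collapse y) v).
  assert (Pf : P (f x)).
  { intros y hy. destruct (collapse_spec y) as [h1 _]. eapply (wo_le_lt_trans HV h1). apply Hf; auto. }
  destruct (least_or_spec P (f x) (ex_intro _ _ Pf)) as [h1 h2].
  assert (E : least_or P (f x) = collapse x) by (rewrite collapse_eq; reflexivity).
  rewrite E in h1, h2.
  assert (~ P v) as nP by (intro Pv; exact (h2 v Pv hv)).
  apply not_all_ex_not in nP. destruct nP as [y hy].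
  apply imply_to_and in hy. destruct hy as [hy1 hy2].
  destruct (wo_not_lt_le HV hy2) as [h3|h3].
  - destruct (IH y hy1 v h3) as [z [hz1 hz2]]. exists z. split; auto. eapply (wo_trans HW); eauto.
  - exists y; auto.
Qed.

Theorem embedding_dichotomy : ord_iso W V \/ exists v, ord_iso W (segment V v).
Proof.
  destruct (classic (forall v, exists x, collapse x = v)) as [Hs|Hn].
  - left. apply (iso_of_surj HW HV collapse_smono Hs).
  - right. apply not_all_ex_not in Hn.
    destruct (wo_least HV (fun v => ~ exists x, collapse x = v) Hn) as [v0 [hv0 hmin]].
    assert (hlt : forall x, lt (collapse x) v0).
    { intro x. destruct (wo_trichotomy HV (collapse x) v0) as [h|[h|h]]; auto.
      - exfalso; apply hv0; eauto.
      - destruct (collapse_down x _ h) as [y [_ hy]]. exfalso; apply hv0; eauto. }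
    exists v0.
    apply (@iso_of_surj W (segment V v0) HW (segment_is_ordinal v0 HV) (fun x => exist _ (collapse x) (hlt x))).
    + intros x y h. simpl. apply collapse_smono; auto.
    + intros [v hv]. assert (exists x, collapse x = v) as [x hx].
      { apply NNPP. intro hn. exact (hmin v hn hv). }
      exists x. apply sig_eq. simpl. auto.
Qed.

End Comparison.

Lemma iso_of_mutual_embeddings {W V : LO} (HW : is_ordinal W) (HV : is_ordinal V) (f : W -> V) (g : V -> W) :
  smono f -> smono g -> ord_iso W V.
Proof.
  intros Hf Hg. destruct (embedding_dichotomy HW HV Hf) as [H|[v [p [q [H1 [H2 H3]]]]]]; auto.
  exfalso.
  set (k := fun x => proj1_sig (p (g x))).
  assert (Hk : smono k).
  { intros x y h. unfold k. apply H3. apply Hg. auto. }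
  apply (smono_inflationary HV Hk v). unfold k. exact (proj2_sig (p (g v))).
Qed.

Unset Implicit Arguments.

Lemma fin_is_ordinal n : is_ordinal (fin n).
Proof.
  split; [|split; [|split]].
  - intros [x px]; simpl. lia.
  - intros [x px] [y py] [z pz]; simpl. lia.
  - intros [x px] [y py]; simpl. destruct (lt_eq_lt_dec x y) as [[h|h]|h]; auto.
    right; left. apply sig_eq; auto.
  - simpl. apply (wf_inverse_image _ _ Peano.lt (fun x : {i : nat | i < n} => proj1_sig x)). apply lt_wf.
Qed.

Lemma succ_is_ordinal (L : LO) : is_ordinal L -> is_ordinal (succ L).
Proof.
  intros HL. split; [|split; [|split]].
  - intros [x|]; simpl; auto. apply (wo_irrefl HL).
  - intros [x|] [y|] [z|]; simpl; auto; try tauto. apply (wo_trans HL).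
  - intros [x|] [y|]; simpl; auto. destruct (wo_trichotomy HL x y) as [h|[h|h]]; subst; auto.
  - assert (HS : forall x : L, Acc (@lt (succ L)) (Some x)).
    { intro x. induction x as [x IH] using (well_founded_ind (wo_wf HL)).
      constructor. intros [y|] h; simpl in h; try tauto. apply IH; auto. }
    intros [x|]; auto. constructor. intros [y|] h; simpl in h; try tauto. auto.
Qed.

Lemma osum_is_ordinal (L M : LO) : is_ordinal L -> is_ordinal M -> is_ordinal (osum L M).
Proof.
  intros HL HM. split; [|split; [|split]].
  - intros [x|x]; simpl; [apply (wo_irrefl HL)|apply (wo_irrefl HM)].
  - intros [x|x] [y|y] [z|z]; simpl; auto; try tauto; [apply (wo_trans HL)|apply (wo_trans HM)].
  - intros [x|x] [y|y]; simpl; auto.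
    + destruct (wo_trichotomy HL x y) as [h|[h|h]]; subst; auto.
    + destruct (wo_trichotomy HM x y) as [h|[h|h]]; subst; auto.
  - assert (HS : forall x : L, Acc (@lt (osum L M)) (inl x)).
    { intro x. induction x as [x IH] using (well_founded_ind (wo_wf HL)).
      constructor. intros [y|y] h; simpl in h; try tauto. apply IH; auto. }
    intros [x|x]; auto.
    induction x as [x IH] using (well_founded_ind (wo_wf HM)).
    constructor. intros [y|y] h; simpl in h; auto.
Qed.

Lemma mul_nat_is_ordinal (L : LO) k : is_ordinal L -> is_ordinal (mul_nat L k).
Proof.
  intros HL. split; [|split; [|split]].
  - intros [[i pi] x]; simpl. intros [h|[_ h]]; [lia|apply (wo_irrefl HL _ h)].
  - intros [[i pi] x] [[j pj] y] [[l pl] z]; simpl.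
    intros [h|[h1 h2]] [h'|[h1' h2']]; try (left; lia). right; split; [lia|]. apply (wo_trans HL h2 h2').
  - intros [[i pi] x] [[j pj] y]; simpl.
    destruct (lt_eq_lt_dec i j) as [[h|h]|h]; auto.
    subst. destruct (wo_trichotomy HL x y) as [h|[h|h]]; auto.
    subst. right; left. f_equal. apply sig_eq; auto.
  - intros [[i pi] x].
    revert pi x. induction i as [i IHi] using (well_founded_ind lt_wf). intros pi x.
    induction x as [x IH] using (well_founded_ind (wo_wf HL)).
    constructor. intros [[j pj] y]; simpl. intros [h|[h1 h2]].
    + apply IHi; auto.
    + simpl in h1. subst. replace pj with pi by apply proof_irrelevance. apply IH; auto.
Qed.

(** * The ordinal omega^C *)

Definition dec (P : Prop) : bool := if excluded_middle_informative P then true else false.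
Lemma dec_true (P : Prop) : P -> dec P = true.
Proof. unfold dec; destruct (excluded_middle_informative P); tauto. Qed.
Lemma dec_false (P : Prop) : ~ P -> dec P = false.
Proof. unfold dec; destruct (excluded_middle_informative P); tauto. Qed.
Lemma dec_spec (P : Prop) : (P /\ dec P = true) \/ (~ P /\ dec P = false).
Proof. destruct (classic P); [left; split; auto using dec_true | right; split; auto using dec_false]. Qed.

Definition coef {C : LO} (f : opow_car C) : C -> nat := proj1_sig f.

Section OmegaPower.
Variable C : LO.
Hypothesis HC : is_ordinal C.

Lemma opow_lt_elim (f g : omega_pow C) :
  lt f g -> exists x, coef f x < coef g x /\ forall y, lt x y -> coef f y = coef g y.
Proof. intro h; exact h. Qed.
Lemma opow_lt_intro (f g : omega_pow C) x :
  coef f x < coef g x -> (forall y, lt x y -> coef f y = coef g y) -> lt f g.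
Proof. intros h1 h2. exists x. split; auto. Qed.

Lemma opow_ext (f g : omega_pow C) : (forall x, coef f x = coef g x) -> f = g.
Proof. intro H. apply sig_eq. extensionality x. apply H. Qed.

Lemma coef_support (f : opow_car C) : exists l, forall x, coef f x <> 0 -> In x l.
Proof. exact (proj2_sig f). Qed.

Lemma support_bound (f g : opow_car C) (F : C -> nat) (extra : list C) :
  (forall x, F x <> 0 -> coef f x <> 0 \/ coef g x <> 0 \/ In x extra) ->
  exists l, forall x, F x <> 0 -> In x l.
Proof.
  intro H. destruct (coef_support f) as [l1 h1], (coef_support g) as [l2 h2].
  exists (l1 ++ l2 ++ extra). intros x hx. apply in_or_app.
  destruct (H x hx) as [h|[h|h]]; [left; auto|right; apply in_or_app; auto..].
Qed.

Definition mk_opow (F : C -> nat) (H : exists l, forall x, F x <> 0 -> In x l) : omega_pow C := exist _ F H.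

Lemma coef_mk_opow F H x : coef (mk_opow F H) x = F x.
Proof. reflexivity. Qed.

Lemma opow_last_difference (f g : omega_pow C) : f <> g ->
  exists p, coef f p <> coef g p /\ forall q, lt p q -> coef f q = coef g q.
Proof.
  intro hne. destruct (coef_support f) as [l1 h1], (coef_support g) as [l2 h2].
  destruct (wo_greatest_finite HC (fun x => coef f x <> coef g x) (l1 ++ l2)) as [p [hp1 hp2]].
  - intros x hx. apply in_or_app. destruct (Nat.eq_dec (coef f x) 0); [right; apply h2; lia|left; apply h1; auto].
  - apply NNPP. intro hn. apply hne. apply opow_ext. intro x. apply NNPP. intro h. eauto.
  - exists p. split; auto. intros q hq. apply NNPP. intro h. destruct (hp2 q h) as [h'|h'].
    + apply (wo_asym HC hq h').
    + subst. apply (wo_irrefl HC _ hq).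
Qed.

Definition supported_upto (t : C) (f : opow_car C) := forall y, lt t y -> coef f y = 0.
Definition supported_below (t : C) (f : opow_car C) := forall y, le t y -> coef f y = 0.

Lemma lower_part_support (f : opow_car C) (t : C) :
  exists l, forall x, (if dec (lt x t) then coef f x else 0) <> 0 -> In x l.
Proof. apply (support_bound f f _ nil). intros x. destruct (dec (lt x t)); auto. Qed.

Definition lower_part (f : opow_car C) (t : C) : omega_pow C := mk_opow _ (lower_part_support f t).

Lemma coef_lower_part f t x : coef (lower_part f t) x = if dec (lt x t) then coef f x else 0.
Proof. reflexivity. Qed.

Lemma lower_part_supported_below f t : supported_below t (lower_part f t).
Proof. intros y hy. rewrite coef_lower_part, dec_false; auto. apply (wo_le_not_lt HC hy). Qed.

Lemma coef_lower_part_lt f t y : lt y t -> coef (lower_part f t) y = coef f y.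
Proof. intro hy. rewrite coef_lower_part, dec_true; auto. Qed.

Lemma opow_greatest_exponent (f : opow_car C) :
  (exists x, coef f x <> 0) -> exists s, coef f s <> 0 /\ supported_upto s f.
Proof.
  intro hx. destruct (coef_support f) as [l hl].
  destruct (wo_greatest_finite HC (fun x => coef f x <> 0) l hl hx) as [s [hs1 hs2]].
  exists s. split; auto. intros y hy. apply NNPP. intro h. apply (wo_le_not_lt HC (hs2 y h) hy).
Qed.

Lemma Acc_opow_zero (f : omega_pow C) : (forall x, coef f x = 0) -> Acc (@lt (omega_pow C)) f.
Proof. intro H. constructor. intros g hg. destruct (opow_lt_elim _ _ hg) as [x [hx _]]. rewrite H in hx. lia. Qed.

Lemma Acc_opow_of_supported (f : omega_pow C) :
  (forall s, coef f s <> 0 -> supported_upto s f -> Acc (@lt (omega_pow C)) f) -> Acc (@lt (omega_pow C)) f.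
Proof.
  intro H. destruct (classic (exists x, coef f x <> 0)) as [hx|hx].
  - destruct (opow_greatest_exponent f hx) as [s [hs1 hs2]]. exact (H s hs1 hs2).
  - apply Acc_opow_zero. intro x. apply NNPP. intro h. eauto.
Qed.

(* Well-foundedness is proved by induction on a bound t of the support, then on
   the coefficient of t, then on the part of the support below t. *)
Section Accessibility.
Variable t : C.
Hypothesis IHt : forall s, lt s t -> forall f, supported_upto s f -> Acc (@lt (omega_pow C)) f.

Lemma Acc_supported_below f : supported_below t f -> Acc (@lt (omega_pow C)) f.
Proof.
  intro hf. apply Acc_opow_of_supported. intros s hs1 hs2. apply (IHt s); auto.
  destruct (wo_trichotomy HC s t) as [h|[h|h]]; auto; exfalso; apply hs1, hf; [right|left]; auto.
Qed.

Lemma Acc_supported_upto_coef n :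
  (forall m, m < n -> forall f, supported_upto t f -> coef f t = m -> Acc (@lt (omega_pow C)) f) ->
  forall r, Acc (@lt (omega_pow C)) r -> supported_below t r ->
  forall f, supported_upto t f -> coef f t = n -> (forall y, lt y t -> coef f y = coef r y) ->
  Acc (@lt (omega_pow C)) f.
Proof.
  intros IHn r Ar. induction Ar as [r _ IHr]. intros hr f hf hn hfr.
  constructor. intros g hgf. destruct (opow_lt_elim _ _ hgf) as [p [hp1 hp2]].
  assert (hpt : ~ lt t p) by (intro h; rewrite (hf p h) in hp1; lia).
  assert (hg : supported_upto t g).
  { intros y hy. rewrite hp2; [apply hf; auto|].
    destruct (wo_trichotomy HC p y) as [h|[h|h]]; auto; exfalso.
    - subst. tauto.
    - apply hpt. apply (wo_trans HC hy h). }
  destruct (wo_trichotomy HC p t) as [h|[h|h]]; [|subst p; apply (IHn (coef g t)); auto; lia|tauto].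
  apply (IHr (lower_part g t)); auto using lower_part_supported_below, coef_lower_part_lt.
  - apply (opow_lt_intro _ _ p); [rewrite coef_lower_part_lt, <- hfr; auto|].
    intros y hy. destruct (classic (lt y t)) as [h1|h1].
    + rewrite coef_lower_part_lt, <- hfr; auto.
    + rewrite (lower_part_supported_below g t y (wo_not_lt_le HC h1)). symmetry. apply hr, (wo_not_lt_le HC h1).
  - rewrite hp2; auto.
  - intros y hy. rewrite coef_lower_part_lt; auto.
Qed.

Lemma Acc_supported_upto f : supported_upto t f -> Acc (@lt (omega_pow C)) f.
Proof.
  remember (coef f t) as n eqn:Hn. revert f Hn.
  induction n as [n IHn] using (well_founded_ind lt_wf). intros f Hn hf.
  apply (Acc_supported_upto_coef n (fun m hm g hg e => IHn m hm g (eq_sym e) hg) (lower_part f t));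
    auto using lower_part_supported_below, coef_lower_part_lt.
  - apply Acc_supported_below, lower_part_supported_below.
  - intros y hy. rewrite coef_lower_part_lt; auto.
Qed.

End Accessibility.

Lemma omega_pow_wf : well_founded (@lt (omega_pow C)).
Proof.
  assert (H : forall t f, supported_upto t f -> Acc (@lt (omega_pow C)) f).
  { intro t. induction t as [t IHt] using (well_founded_ind (wo_wf HC)).
    apply Acc_supported_upto. exact IHt. }
  intro f. apply Acc_opow_of_supported. intros s _ hs. apply (H s f hs).
Qed.
Lemma omega_pow_is_ordinal : is_ordinal (omega_pow C).
Proof.
  split; [|split; [|split]].
  - intros f hf. destruct (opow_lt_elim _ _ hf) as [x [hx _]]. lia.
  - intros f g h hfg hgh. 
    destruct (opow_lt_elim _ _ hfg) as [x [hx1 hx2]]. destruct (opow_lt_elim _ _ hgh) as [y [hy1 hy2]].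
    destruct (wo_trichotomy HC x y) as [e|[e|e]].
    + apply (opow_lt_intro _ _ y). { rewrite hx2 by auto. auto. } intros z hz. rewrite hx2, hy2; auto. apply (wo_trans HC e hz).
    + subst. apply (opow_lt_intro _ _ y). { lia. } intros z hz. rewrite hx2, hy2; auto.
    + apply (opow_lt_intro _ _ x). { rewrite <- (hy2 x) by auto. auto. } intros z hz. rewrite hx2, hy2; auto. apply (wo_trans HC e hz).
  - intros f g. destruct (classic (f = g)) as [e|e]; auto.
    destruct (opow_last_difference _ _ e) as [p [hp1 hp2]].
    destruct (lt_eq_lt_dec (coef f p) (coef g p)) as [[h|h]|h]; try tauto.
    + left. apply (opow_lt_intro _ _ p); auto.
    + right; right. apply (opow_lt_intro _ _ p); auto. intros q hq; symmetry; auto.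
  - apply omega_pow_wf.
Qed.

End OmegaPower.
Arguments supported_upto {C}.
Arguments supported_below {C}.
Arguments mk_opow {C}.
Arguments lower_part {C}.

Lemma osum_iso (A A' B B' : LO) : ord_iso A A' -> ord_iso B B' -> ord_iso (osum A B) (osum A' B').
Proof.
  intros [f [g [h1 [h2 h3]]]] [f' [g' [h1' [h2' h3']]]].
  exists (fun z : osum A B => match z with inl x => inl (f x) | inr y => inr (f' y) end : osum A' B').
  exists (fun z : osum A' B' => match z with inl x => inl (g x) | inr y => inr (g' y) end : osum A B).
  split; [|split].
  - intros [x|x]; simpl; [rewrite h1|rewrite h1']; auto.
  - intros [x|x]; simpl; [rewrite h2|rewrite h2']; auto.
  - intros [x|x] [y|y]; simpl; try tauto; auto.
Qed.

Lemma support_pull {A B : Type} (phi : A -> B) (Hinj : forall a a', phi a = phi a' -> a = a')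
  (F : B -> nat) : (exists l, forall b, F b <> 0 -> In b l) -> exists l', forall a, F (phi a) <> 0 -> In a l'.
Proof.
  intros [l hl].
  assert (H : forall l : list B, exists l' : list A, forall a, In (phi a) l -> In a l').
  { induction l0 as [|b l0 [l' hl']].
    - exists nil. intros a [].
    - destruct (classic (exists a, phi a = b)) as [[a0 ha0]|hn].
      + exists (a0 :: l'). intros a [e|e]; simpl; auto. left. apply Hinj. congruence.
      + exists l'. intros a [e|e]; auto. exfalso; eauto. }
  destruct (H l) as [l' hl']. exists l'. intros a ha. apply hl', hl, ha.
Qed.

Lemma partition_iso (X : LO) (HX : is_ordinal X) (R A B : X -> Prop) :
  (forall x, R x <-> A x \/ B x) -> (forall x y, A x -> B y -> lt x y) ->
  ord_iso (sub X R) (osum (sub X A) (sub X B)).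
Proof.
  intros hR hAB.
  assert (hB : forall x, R x -> ~ A x -> B x) by (intros x r na; apply hR in r; tauto).
  set (phi := fun x : sub X R =>
    match excluded_middle_informative (A (proj1_sig x)) with
    | left a => inl (exist A (proj1_sig x) a) : osum (sub X A) (sub X B)
    | right na => inr (exist B (proj1_sig x) (hB _ (proj2_sig x) na))
    end).
  apply (@iso_of_surj _ _ (sub_is_ordinal R HX) (osum_is_ordinal _ _ (sub_is_ordinal A HX) (sub_is_ordinal B HX)) phi).
  - intros [x rx] [y ry] h. unfold phi. simpl in *.
    destruct (excluded_middle_informative (A x)) as [a|na];
    destruct (excluded_middle_informative (A y)) as [a'|na']; simpl; auto.
    apply (wo_asym HX h). apply hAB; auto.
  - intros [[x ax]|[x bx]].
    + assert (rx : R x) by (apply hR; auto). exists (exist _ x rx). unfold phi. simpl.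
      destruct (excluded_middle_informative (A x)) as [a|na]; [|exfalso; apply na; exact ax].
      f_equal. apply sig_eq. reflexivity.
    + assert (rx : R x) by (apply hR; auto). exists (exist _ x rx). unfold phi. simpl.
      destruct (excluded_middle_informative (A x)) as [a|na].
      * exfalso. apply (wo_irrefl HX x). apply hAB; [exact a|exact bx].
      * f_equal. apply sig_eq. reflexivity.
Qed.

Lemma omega_pow_iso (A A' : LO) (HA : is_ordinal A) (HA' : is_ordinal A') :
  ord_iso A A' -> ord_iso (omega_pow A) (omega_pow A').
Proof.
  intros [f [g [gf [fg mono]]]].
  assert (sp : forall F : omega_pow A, exists l, forall y, coef F (g y) <> 0 -> In y l).
  { intro F. destruct (coef_support A F) as [l hl]. exists (map f l). intros y hy.
    rewrite <- (fg y). apply in_map. auto. }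
  assert (sp' : forall G : omega_pow A', exists l, forall x, coef G (f x) <> 0 -> In x l).
  { intro G. destruct (coef_support A' G) as [l hl]. exists (map g l). intros x hx.
    rewrite <- (gf x). apply in_map. auto. }
  set (phi := fun F : omega_pow A => mk_opow (fun y => coef F (g y)) (sp F) : omega_pow A').
  apply (@iso_of_surj _ _ (omega_pow_is_ordinal A HA) (omega_pow_is_ordinal A' HA') phi).
  - intros F G h. destruct (opow_lt_elim A _ _ h) as [w [h1 h2]].
    apply (opow_lt_intro A' _ _ (f w)).
    + unfold phi. rewrite !coef_mk_opow, gf. auto.
    + intros y hy. unfold phi. rewrite !coef_mk_opow. apply h2.
      apply (proj2 (mono w (g y))). rewrite fg. auto.
  - intro G. exists (mk_opow (fun x => coef G (f x)) (sp' G)). apply opow_ext. intro y.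
    unfold phi. rewrite !coef_mk_opow, fg. auto.
Qed.

Lemma mul_nat_iso (L L' : LO) k : ord_iso L L' -> ord_iso (mul_nat L k) (mul_nat L' k).
Proof.
  intros [f [g [gf [fg mono]]]].
  exists (fun p : mul_nat L k => (fst p, f (snd p)) : mul_nat L' k).
  exists (fun p : mul_nat L' k => (fst p, g (snd p)) : mul_nat L k).
  split; [|split].
  - intros [i x]; simpl. rewrite gf; auto.
  - intros [i x]; simpl. rewrite fg; auto.
  - intros [i x] [j y]; simpl. rewrite (mono x y). tauto.
Qed.

Lemma succ_iso (L L' : LO) : ord_iso L L' -> ord_iso (succ L) (succ L').
Proof.
  intros [f [g [gf [fg mono]]]].
  exists (fun p : succ L => option_map f p : succ L').
  exists (fun p : succ L' => option_map g p : succ L).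
  split; [|split].
  - intros [x|]; simpl; auto. rewrite gf; auto.
  - intros [x|]; simpl; auto. rewrite fg; auto.
  - intros [x|] [y|]; simpl; try tauto. apply mono.
Qed.

(** * Order topology *)

Lemma interval_open (X : LO) lo hi : ord_open X (in_interval X lo hi).
Proof. intros x hx. exists lo, hi. split; auto. Qed.

Lemma all_open (X : LO) : ord_open X (fun _ => True).
Proof. intros x _. exists None, None. repeat split. Qed.

Lemma iso_continuous (X Y : LO) (f : X -> Y) (g : Y -> X) :
  (forall y, f (g y) = y) -> (forall x x', lt x x' <-> lt (f x) (f x')) -> ord_continuous X Y f.
Proof.
  intros fg mono V hV x hx. destruct (hV (f x) hx) as [lo [hi [[h1 h2] h3]]].
  exists (option_map g lo), (option_map g hi). split.
  - split.
    + destruct lo as [a|]; simpl in *; auto. apply mono. rewrite fg. auto.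
    + destruct hi as [b|]; simpl in *; auto. apply mono. rewrite fg. auto.
  - intros z [hz1 hz2]. apply h3. split.
    + destruct lo as [a|]; simpl in *; auto. rewrite <- (fg a). apply mono. auto.
    + destruct hi as [b|]; simpl in *; auto. rewrite <- (fg b). apply mono. auto.
Qed.

Lemma iso_homeomorphic (X Y : LO) : ord_iso X Y -> homeomorphic X Y.
Proof.
  intros H. pose proof (iso_sym H) as H'.
  destruct H as [f [g [gf [fg mono]]]]. destruct H' as [g' [f' [_ [_ mono']]]].
  exists f, g. repeat split; auto.
  - apply (iso_continuous X Y f g); auto.
  - apply (iso_continuous Y X g f); auto.
    intros y y'. split; intro h.
    + apply mono. rewrite !fg. auto.
    + apply mono in h. rewrite !fg in h. auto.
Qed.

Lemma homeo_sym X Y : homeomorphic X Y -> homeomorphic Y X.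
Proof. intros [f [g [h1 [h2 [h3 h4]]]]]. exists g, f. auto. Qed.

Lemma homeo_trans X Y Z : homeomorphic X Y -> homeomorphic Y Z -> homeomorphic X Z.
Proof.
  intros [f [g [h1 [h2 [h3 h4]]]]] [f' [g' [h1' [h2' [h3' h4']]]]].
  exists (fun x => f' (f x)), (fun z => g (g' z)). split; [|split; [|split]].
  - intro x. rewrite h1', h1. auto.
  - intro z. rewrite h2, h2'. auto.
  - intros V hV. apply (h3 (fun y => V (f' y))). apply h3'. auto.
  - intros V hV. apply (h4' (fun y => V (g y))). apply h4. auto.
Qed.

Lemma iso_homeo_trans X Y Z : ord_iso X Y -> homeomorphic Y Z -> homeomorphic X Z.
Proof. intros h1 h2. eapply homeo_trans; [apply iso_homeomorphic|]; eauto. Qed.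
Lemma homeo_iso_trans X Y Z : homeomorphic X Y -> ord_iso Y Z -> homeomorphic X Z.
Proof. intros h1 h2. eapply homeo_trans; [|apply iso_homeomorphic]; eauto. Qed.

Definition max_or_empty (L : LO) := (forall x : L, False) \/ exists m : L, forall x, ~ lt m x.

Lemma osum_max_or_empty (P Q : LO) : max_or_empty P -> max_or_empty Q -> max_or_empty (osum P Q).
Proof.
  intros [hP|[p hp]] [hQ|[q hq]].
  - left. intros [x|x]; [exact (hP x)|exact (hQ x)].
  - right. exists (inr q). intros [x|x]; simpl; auto.
  - right. exists (inl p). intros [x|x]; simpl; [apply hp|destruct (hQ x)].
  - right. exists (inr q). intros [x|x]; simpl; auto.
Qed.

Lemma osum_open_l (L M : LO) U : ord_open (osum L M) U -> ord_open L (fun x => U (inl x)).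
Proof.
  intros hU x hx. destruct (hU (inl x) hx) as [lo [hi [[h1 h2] h3]]].
  exists (match lo with Some (inl a) => Some a | _ => None end),
         (match hi with Some (inl b) => Some b | _ => None end).
  split.
  - split.
    + destruct lo as [[a|a]|]; simpl in *; auto.
    + destruct hi as [[b|b]|]; simpl in *; auto.
  - intros z [hz1 hz2]. apply h3. split.
    + destruct lo as [[a|a]|]; simpl in *; auto.
    + destruct hi as [[b|b]|]; simpl in *; auto.
Qed.

Lemma osum_open_r (L M : LO) U : ord_open (osum L M) U -> ord_open M (fun x => U (inr x)).
Proof.
  intros hU x hx. destruct (hU (inr x) hx) as [lo [hi [[h1 h2] h3]]].
  exists (match lo with Some (inr a) => Some a | _ => None end),
         (match hi with Some (inr b) => Some b | _ => None end).
  split.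
  - split.
    + destruct lo as [[a|a]|]; simpl in *; auto.
    + destruct hi as [[b|b]|]; simpl in *; auto.
  - intros z [hz1 hz2]. apply h3. split.
    + destruct lo as [[a|a]|]; simpl in *; auto.
    + destruct hi as [[b|b]|]; simpl in *; auto.
Qed.

Lemma osum_open_lr (L M : LO) (HM : is_ordinal M) (HL : max_or_empty L) U :
  ord_open L (fun x => U (inl x)) -> ord_open M (fun x => U (inr x)) -> ord_open (osum L M) U.
Proof.
  intros h1 h2 [x|x] hx.
  - destruct (h1 x hx) as [lo [hi [[i1 i2] i3]]].
    destruct (classic (exists y : M, True)) as [[y _]|hM].
    + destruct (wo_least HM (fun _ => True) (ex_intro _ y I)) as [m0 [_ hm0]].
      exists (option_map inl lo), (match hi with Some b => Some (inl b) | None => Some (inr m0) end).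
      split.
      * split; [destruct lo; simpl in *; auto|destruct hi; simpl in *; auto].
      * intros [z|z] [k1 k2].
        -- apply i3. split; [destruct lo; simpl in *; auto|destruct hi; simpl in *; auto].
        -- exfalso. destruct hi; simpl in *; auto. apply (hm0 z I k2).
    + exists (option_map inl lo), (option_map inl hi). split.
      * split; [destruct lo; simpl in *; auto|destruct hi; simpl in *; auto].
      * intros [z|z] [k1 k2].
        -- apply i3. split; [destruct lo; simpl in *; auto|destruct hi; simpl in *; auto].
        -- exfalso. apply hM. exists z; auto.
  - destruct (h2 x hx) as [lo [hi [[i1 i2] i3]]].
    destruct HL as [hL|[m hm]].
    + exists (option_map inr lo), (option_map inr hi). split.
      * split; [destruct lo; simpl in *; auto|destruct hi; simpl in *; auto].
      * intros [z|z] [k1 k2].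
        -- destruct (hL z).
        -- apply i3. split; [destruct lo; simpl in *; auto|destruct hi; simpl in *; auto].
    + exists (match lo with Some a => Some (inr a) | None => Some (inl m) end), (option_map inr hi).
      split.
      * split; [destruct lo; simpl in *; auto|destruct hi; simpl in *; auto].
      * intros [z|z] [k1 k2].
        -- exfalso. destruct lo; simpl in *; auto. apply (hm z k1).
        -- apply i3. split; [destruct lo; simpl in *; auto|destruct hi; simpl in *; auto].
Qed.

Definition osum_swap_map {P Q : LO} (z : osum P Q) : osum Q P :=
  match z with inl x => inr x | inr y => inl y end.

Lemma osum_swap (P Q : LO) (HP : is_ordinal P) (HQ : is_ordinal Q) (mP : max_or_empty P) (mQ : max_or_empty Q) :
  homeomorphic (osum P Q) (osum Q P).
Proof.
  exists osum_swap_map, osum_swap_map. split; [|split; [|split]].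
  - intros [x|x]; reflexivity.
  - intros [x|x]; reflexivity.
  - intros V hV. apply (osum_open_lr P Q HQ mP).
    + exact (osum_open_r Q P V hV).
    + exact (osum_open_l Q P V hV).
  - intros V hV. apply (osum_open_lr Q P HP mQ).
    + exact (osum_open_r P Q V hV).
    + exact (osum_open_l P Q V hV).
Qed.

Lemma osum_homeo_l (M1 M2 T : LO) (HT : is_ordinal T) (m1 : max_or_empty M1) (m2 : max_or_empty M2) :
  homeomorphic M1 M2 -> homeomorphic (osum M1 T) (osum M2 T).
Proof.
  intros [f [g [gf [fg [cf cg]]]]].
  exists (fun z : osum M1 T => match z with inl x => inl (f x) | inr y => inr y end : osum M2 T).
  exists (fun z : osum M2 T => match z with inl x => inl (g x) | inr y => inr y end : osum M1 T).
  split; [|split; [|split]].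
  - intros [x|x]; simpl; [rewrite gf|]; auto.
  - intros [x|x]; simpl; [rewrite fg|]; auto.
  - intros V hV. apply (osum_open_lr M1 T HT m1).
    + apply (cf (fun x => V (inl x))). exact (osum_open_l M2 T V hV).
    + exact (osum_open_r M2 T V hV).
  - intros V hV. apply (osum_open_lr M2 T HT m2).
    + apply (cg (fun x => V (inl x))). exact (osum_open_l M1 T V hV).
    + exact (osum_open_r M1 T V hV).
Qed.

Definition acc_point (X : LO) (x : X) (T : X -> Prop) :=
  forall U, ord_open X U -> U x -> exists y, y <> x /\ U y /\ T y.

Definition acc_point_interval (X : LO) (x : X) (T : X -> Prop) :=
  forall lo hi, in_interval X lo hi x -> exists y, y <> x /\ in_interval X lo hi y /\ T y.

Lemma acc_point_interval_iff (X : LO) x T : acc_point_interval X x T <-> acc_point X x T.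
Proof.
  split.
  - intros H U hU hx. destruct (hU x hx) as [lo [hi [h1 h2]]].
    destruct (H lo hi h1) as [y [k1 [k2 k3]]]. exists y; auto.
  - intros H lo hi h. apply (H _ (interval_open X lo hi) h).
Qed.

Lemma acc_point_mono (X : LO) x (T T' : X -> Prop) : (forall z, T z -> T' z) -> acc_point X x T -> acc_point X x T'.
Proof. intros H h U hU hx. destruct (h U hU hx) as [y [k1 [k2 k3]]]. eauto. Qed.

Lemma acc_point_homeo (X Y : LO) (f : X -> Y) (g : Y -> X) :
  (forall x, g (f x) = x) -> ord_continuous X Y f ->
  forall x T, acc_point X x T -> acc_point Y (f x) (fun y => T (g y)).
Proof.
  intros gf cf x T h U hU hx. destruct (h (fun z => U (f z)) (cf U hU) hx) as [y [k1 [k2 k3]]].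
  exists (f y). split; [|split]; auto.
  - intro e. apply k1. rewrite <- (gf y), e, gf. auto.
  - rewrite gf. auto.
Qed.

Definition compact (X : LO) (K : X -> Prop) :=
  forall (I : Type) (U : I -> X -> Prop), (forall i, ord_open X (U i)) ->
    (forall x, K x -> exists i, U i x) -> exists l : list I, forall x, K x -> exists i, In i l /\ U i x.

Definition rel_compact (X : LO) (T : X -> Prop) := exists K, compact X K /\ forall x, T x -> K x.
Definition bounded (X : LO) (T : X -> Prop) := exists u : X, forall x, T x -> le x u.

Lemma bounded_mono (X : LO) (T T' : X -> Prop) : (forall x, T' x -> T x) -> bounded X T -> bounded X T'.
Proof. intros h [u hu]. exists u. auto. Qed.

Lemma rel_compact_homeo (X Y : LO) (f : X -> Y) (g : Y -> X) :
  (forall x, g (f x) = x) -> (forall y, f (g y) = y) -> ord_continuous X Y f ->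
  forall T, rel_compact X T -> rel_compact Y (fun y => T (g y)).
Proof.
  intros gf fg cf T [K [hK hT]]. exists (fun y => K (g y)). split; auto.
  intros I U hU hc. destruct (hK I (fun i x => U i (f x))) as [l hl].
  - intro i. apply cf. auto.
  - intros x hx. apply hc. rewrite gf. auto.
  - exists l. intros y hy. destruct (hl (g y) hy) as [i [k1 k2]]. exists i. split; auto.
    rewrite fg in k2. auto.
Qed.

Lemma compact_initial_interval (X : LO) (HX : is_ordinal X) (u : X) : compact X (fun x => le x u).
Proof.
  intros I U hU hc.
  assert (H : forall x, le x u -> exists l : list I, forall z, le z x -> exists i, In i l /\ U i z).
  { intro x. induction x as [x IH] using (well_founded_ind (wo_wf HX)). intros hx.
    destruct (hc x hx) as [i0 hi0]. destruct (hU i0 x hi0) as [lo [hi [[k1 k2] k3]]].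
    destruct lo as [a|].
    - destruct (IH a k1 (wo_le_trans HX (or_introl k1) hx)) as [l hl].
      exists (i0 :: l). intros z hz. destruct (classic (le z a)) as [h|h].
      + destruct (hl z h) as [i [j1 j2]]. exists i. split; simpl; auto.
      + exists i0. split; simpl; auto. apply k3. split.
        * simpl. destruct (wo_trichotomy HX a z) as [e|[e|e]]; auto; exfalso; apply h; [right|left]; auto.
        * destruct hi as [b|]; simpl in *; auto. apply (wo_le_lt_trans HX hz k2).
    - exists [i0]. intros z hz. exists i0. split; simpl; auto. apply k3. split; simpl; auto.
      destruct hi as [b|]; simpl in *; auto. apply (wo_le_lt_trans HX hz k2). }
  destruct (H u (or_intror eq_refl)) as [l hl]. exists l. intros x hx. apply hl; auto.
Qed.

Lemma rel_compact_iff_bounded (X : LO) (HX : is_ordinal X) (x0 : X) T : rel_compact X T <-> bounded X T.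
Proof.
  split.
  - intros [K [hK hT]].
    destruct (classic (exists m : X, forall x, ~ lt m x)) as [[m hm]|hn].
    + exists m. intros x _. apply (wo_not_lt_le HX (hm x)).
    + assert (hall : forall m : X, exists x, lt m x).
      { intro m. apply NNPP. intro h. apply hn. exists m. intros x hx. apply h. eauto. }
      destruct (hK X (fun x z => lt z x)) as [l hl].
      * intros i z hz. exists None, (Some i). split; [split; simpl; auto|].
        intros y [_ hy]. exact hy.
      * intros x _. apply hall.
      * destruct l as [|a l].
        -- exists x0. intros x hx. destruct (hl x (hT x hx)) as [i [[] _]].
        -- destruct (wo_greatest_finite HX (fun x => In x (a :: l)) (a :: l)) as [m [_ hm]]; auto.
           { exists a; simpl; auto. }
           exists m. intros x hx. destruct (hl x (hT x hx)) as [i [k1 k2]].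
           left. apply (wo_lt_le_trans HX k2 (hm i k1)).
  - intros [u hu]. exists (fun x => le x u). split; auto. apply compact_initial_interval; auto.
Qed.

(** * Cantor-Bendixson rank *)

Definition derived (X : LO) (F : X -> Prop) : X -> Prop := fun x => acc_point X x F.

(* Sets reached from the whole space by derived sets and intersections.  They are
   preserved by homeomorphisms, and the order of any rank function can be read off
   them ([rank_function_lt_iff]). *)
Inductive cb_set (X : LO) : (X -> Prop) -> Prop :=
| cb_all : cb_set X (fun _ => True)
| cb_der : forall F, cb_set X F -> cb_set X (derived X F)
| cb_int : forall (P : (X -> Prop) -> Prop), (forall F, P F -> cb_set X F) -> cb_set X (fun x => forall F, P F -> F x)
| cb_ext : forall F G, cb_set X F -> (forall x, F x <-> G x) -> cb_set X G.

Lemma cb_set_homeo (X Y : LO) (f : X -> Y) (g : Y -> X) :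
  (forall x, g (f x) = x) -> (forall y, f (g y) = y) -> ord_continuous X Y f -> ord_continuous Y X g ->
  forall F, cb_set X F -> cb_set Y (fun y => F (g y)).
Proof.
  intros gf fg cf cg F H. induction H as [|F H IH|P H IH|F G H IH e].
  - apply cb_all.
  - apply (cb_ext Y (derived Y (fun y => F (g y)))). { apply cb_der; auto. }
    intro y. unfold derived. split; intro h.
    + pose proof (acc_point_homeo Y X g f fg cg y _ h) as h'.
      apply (acc_point_mono X _ (fun x => F (g (f x)))); auto. intros z hz. rewrite gf in hz. auto.
    + pose proof (acc_point_homeo X Y f g gf cf (g y) F h) as h'. rewrite fg in h'. auto.
  - apply (cb_ext Y (fun y => forall G, (exists F, P F /\ forall y, G y <-> F (g y)) -> G y)).
    + apply cb_int. intros G [F [hF e]]. apply (cb_ext Y (fun y => F (g y))); auto.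
      intro y; rewrite e; tauto.
    + intro y. split.
      * intros h F hF. apply (h (fun y => F (g y))). exists F; split; auto. tauto.
      * intros h G [F [hF e]]. apply e. apply (h F hF).
  - apply (cb_ext Y (fun y => F (g y))); auto.
Qed.

Definition rank_function (X W : LO) (rho : X -> W) :=
  forall x z : X, lt (rho z) (rho x) <-> acc_point X x (fun y => le (rho z) (rho y)).

Section RankFunction.
Variables X W : LO.
Hypothesis HW : is_ordinal W.
Variable rho : X -> W.
Hypothesis Hr : rank_function X W rho.

Lemma cb_set_rank_upper : forall w, cb_set X (fun y => le w (rho y)).
Proof.
  intro w. induction w as [w IH] using (well_founded_ind (wo_wf HW)).
  apply (cb_ext X (fun y => forall G, (exists z, lt (rho z) w /\
            forall y, G y <-> derived X (fun y' => le (rho z) (rho y')) y) -> G y)).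
  - apply cb_int. intros G [z [hz e]].
    apply (cb_ext X (derived X (fun y' => le (rho z) (rho y')))).
    + apply cb_der. apply IH; auto.
    + intro y; rewrite e; tauto.
  - intro y. split.
    + intro h. apply (wo_not_lt_le HW). intro hy.
      assert (hd : derived X (fun y' => le (rho y) (rho y')) y).
      { apply (h (derived X (fun y' => le (rho y) (rho y')))). exists y. split; auto. intro; tauto. }
      unfold derived in hd. apply Hr in hd. apply (wo_irrefl HW _ hd).
    + intros h G [z [hz e]]. apply e. unfold derived. apply Hr. apply (wo_lt_le_trans HW hz h).
Qed.

Lemma cb_set_rank_upward : forall F, cb_set X F -> forall y y', F y -> le (rho y) (rho y') -> F y'.
Proof.
  intros F H. induction H as [|F H IH|P H IH|F G H IH e].
  - auto.
  - intros y y' hy hle. unfold derived in *.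
    destruct (classic (exists u, F u)) as [hu|hu].
    + destruct (wo_least HW (fun w => exists u, F u /\ rho u = w)) as [w0 [[u0 [hu0 e0]] hmin]].
      { destruct hu as [u hu]. eauto. }
      subst w0.
      assert (eqF : forall v, F v <-> le (rho u0) (rho v)).
      { intro v. split; intro h.
        - apply (wo_not_lt_le HW). intro h'. apply (hmin (rho v)); eauto.
        - apply (IH u0 v hu0 h). }
      assert (h1 : acc_point X y (fun v => le (rho u0) (rho v))).
      { apply (acc_point_mono X y F); auto. intros z hz. apply eqF; auto. }
      apply Hr in h1. 
      assert (h2 : acc_point X y' (fun v => le (rho u0) (rho v))).
      { apply Hr. apply (wo_lt_le_trans HW h1 hle). }
      apply (acc_point_mono X y' (fun v => le (rho u0) (rho v)) F); auto. intros z hz. apply eqF; auto.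
    + exfalso. destruct (hy (fun _ => True) (all_open X) I) as [v [_ [_ hv]]]. apply hu; exists v; exact hv.
  - intros y y' hy hle G hG. apply (IH G hG y y' (hy G hG) hle).
  - intros y y' hy hle. apply e. apply (IH y); auto. apply e; auto.
Qed.

Lemma rank_function_lt_iff x z : lt (rho z) (rho x) <-> exists F, cb_set X F /\ F x /\ ~ F z.
Proof.
  split.
  - intro h. exists (fun y => le (rho x) (rho y)). split; [apply cb_set_rank_upper|split].
    + right; auto.
    + intro h'. apply (wo_le_not_lt HW h' h).
  - intros [F [hF [hx hz]]]. apply NNPP. intro h. apply hz.
    apply (cb_set_rank_upward F hF x z hx). apply (wo_not_lt_le HW h).
Qed.

End RankFunction.

Lemma rank_transfer (X Y W W' : LO) (HW : is_ordinal W) (HW' : is_ordinal W')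
  (rho : X -> W) (sg : Y -> W') (R1 : rank_function X W rho) (R2 : rank_function Y W' sg)
  (f : X -> Y) (g : Y -> X) :
  (forall x, g (f x) = x) -> (forall y, f (g y) = y) -> ord_continuous X Y f -> ord_continuous Y X g ->
  forall x z, lt (rho z) (rho x) <-> lt (sg (f z)) (sg (f x)).
Proof.
  intros gf fg cf cg x z. rewrite (rank_function_lt_iff X W HW rho R1), (rank_function_lt_iff Y W' HW' sg R2). split.
  - intros [F [hF [h1 h2]]]. exists (fun y => F (g y)). split; [apply (cb_set_homeo X Y f g); auto|].
    rewrite !gf. auto.
  - intros [G [hG [h1 h2]]]. exists (fun x => G (f x)). split; [apply (cb_set_homeo Y X g f); auto|]. auto.
Qed.

(** * Least exponents in omega^C *)

Section OmegaPowerOps.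
Variable C : LO.
Hypothesis HC : is_ordinal C.

Lemma ozero_support : exists l, forall x : C, (fun _ => 0) x <> 0 -> In x l.
Proof. exists nil. intros x h. lia. Qed.
Definition ozero : omega_pow C := mk_opow (fun _ => 0) ozero_support.

Lemma coef_ozero x : coef ozero x = 0.
Proof. reflexivity. Qed.

Lemma not_lt_ozero (f : omega_pow C) : ~ lt f ozero.
Proof. intro h. destruct (opow_lt_elim C _ _ h) as [x [hx _]]. rewrite coef_ozero in hx. lia. Qed.

Lemma ozero_lt (f : omega_pow C) : f <> ozero -> lt ozero f.
Proof.
  intro h. destruct (wo_trichotomy (omega_pow_is_ordinal C HC) ozero f) as [e|[e|e]]; auto.
  - congruence.
  - destruct (not_lt_ozero _ e).
Qed.

Lemma nonzero_coef (f : omega_pow C) : f <> ozero -> exists d, coef f d <> 0.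
Proof.
  intro h. apply NNPP. intro hn. apply h. apply opow_ext. intro x. rewrite coef_ozero.
  apply NNPP. intro e. apply hn. eauto.
Qed.

Lemma set_coef_support (f : omega_pow C) (a : C) (n : nat) :
  exists l, forall x, (if dec (x = a) then n else coef f x) <> 0 -> In x l.
Proof.
  apply (support_bound C f f _ [a]). intros x. destruct (dec_spec (x = a)) as [[h1 h2]|[h1 h2]]; rewrite h2.
  - subst. simpl; auto.
  - auto.
Qed.
Definition set_coef (f : omega_pow C) (a : C) (n : nat) : omega_pow C := mk_opow _ (set_coef_support f a n).

Lemma coef_set f a n x : coef (set_coef f a n) x = if dec (x = a) then n else coef f x.
Proof. reflexivity. Qed.
Lemma coef_set_eq f a n : coef (set_coef f a n) a = n.
Proof. rewrite coef_set, dec_true; auto. Qed.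
Lemma coef_set_ne f a n x : x <> a -> coef (set_coef f a n) x = coef f x.
Proof. intro h. rewrite coef_set, dec_false; auto. Qed.

Definition monom (a : C) (n : nat) : omega_pow C := set_coef ozero a n.

Lemma coef_monom (a : C) n y : coef (monom a n) y = if dec (y = a) then n else 0.
Proof. unfold monom. rewrite coef_set. reflexivity. Qed.
Lemma coef_monom_eq (a : C) n : coef (monom a n) a = n.
Proof. rewrite coef_monom, dec_true; auto. Qed.
Lemma coef_monom_ne (a : C) n y : y <> a -> coef (monom a n) y = 0.
Proof. intro h. rewrite coef_monom, dec_false; auto. Qed.

Lemma monom_lt_monom (a : C) i j : i < j -> lt (monom a i) (monom a j).
Proof.
  intro h. apply (opow_lt_intro C _ _ a); [rewrite !coef_monom_eq; auto|].
  intros y hy. rewrite !coef_monom_ne; auto; apply (wo_gt_neq HC hy).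
Qed.

(* [bump f b] agrees with f above b, exceeds it by one at b and vanishes below b:
   the least point above f whose least exponent is b. *)
Lemma bump_support (f : omega_pow C) (b : C) :
  exists l, forall x, (if dec (lt b x) then coef f x else if dec (x = b) then coef f b + 1 else 0) <> 0 -> In x l.
Proof.
  apply (support_bound C f f _ [b]). intros x.
  destruct (dec (lt b x)); auto. destruct (dec_spec (x = b)) as [[h1 h2]|[h1 h2]]; rewrite h2.
  - subst; simpl; auto.
  - lia.
Qed.
Definition bump (f : omega_pow C) (b : C) : omega_pow C := mk_opow _ (bump_support f b).

Lemma coef_bump_gt f b x : lt b x -> coef (bump f b) x = coef f x.
Proof. intro h. unfold bump. rewrite coef_mk_opow, dec_true; auto. Qed.
Lemma coef_bump_eq f b : coef (bump f b) b = coef f b + 1.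
Proof. unfold bump. rewrite coef_mk_opow, dec_false, dec_true; auto. apply (wo_irrefl HC). Qed.
Lemma coef_bump_lt f b x : lt x b -> coef (bump f b) x = 0.
Proof.
  intro h. unfold bump. rewrite coef_mk_opow, dec_false, dec_false; auto.
  - intro e; subst; apply (wo_irrefl HC _ h).
  - apply (wo_asym HC h).
Qed.

Lemma lt_bump (f : omega_pow C) b : lt f (bump f b).
Proof.
  apply (opow_lt_intro C _ _ b). { rewrite coef_bump_eq; lia. }
  intros y hy. rewrite coef_bump_gt; auto.
Qed.

Variable c0 : C.
Hypothesis Hc0 : forall c, le c0 c.

Definition osucc (f : omega_pow C) : omega_pow C := set_coef f c0 (coef f c0 + 1).

Lemma lt_osucc (f : omega_pow C) : lt f (osucc f).
Proof.
  apply (opow_lt_intro C _ _ c0). { unfold osucc; rewrite coef_set_eq; lia. }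
  intros y hy. unfold osucc. rewrite coef_set_ne; auto. intro e; subst; apply (wo_irrefl HC _ hy).
Qed.

Lemma osucc_le (f g : omega_pow C) : lt f g -> le (osucc f) g.
Proof.
  intro h. destruct (opow_lt_elim C _ _ h) as [p [hp1 hp2]].
  destruct (Hc0 p) as [e|e].
  - left. apply (opow_lt_intro C _ _ p).
    + unfold osucc. rewrite coef_set_ne; auto. intro e'; subst; apply (wo_irrefl HC _ e).
    + intros y hy. unfold osucc. rewrite coef_set_ne; auto. intro e'; subst. apply (wo_asym HC e hy).
  - subst p. destruct (Nat.eq_dec (coef g c0) (coef f c0 + 1)) as [e|e].
    + right. apply opow_ext. intro x. unfold osucc. rewrite coef_set.
      destruct (dec_spec (x = c0)) as [[h1 h2]|[h1 h2]]; rewrite h2.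
      * subst; auto.
      * apply hp2. destruct (Hc0 x); auto. congruence.
    + left. apply (opow_lt_intro C _ _ c0).
      * unfold osucc. rewrite coef_set_eq. lia.
      * intros y hy. unfold osucc. rewrite coef_set_ne; auto. intro e'; subst; apply (wo_irrefl HC _ hy).
Qed.

Definition is_lexp (f : omega_pow C) (c : C) :=
  (coef f c <> 0 /\ forall d, lt d c -> coef f d = 0) \/ ((forall d, coef f d = 0) /\ c = c0).

Lemma is_lexp_exists f : exists c, is_lexp f c.
Proof.
  destruct (classic (exists d, coef f d <> 0)) as [h|h].
  - destruct (wo_least HC _ h) as [m [hm1 hm2]]. exists m. left. split; auto.
    intros d hd. apply NNPP. intro e. exact (hm2 d e hd).
  - exists c0. right. split; auto. intro d. apply NNPP. intro e. apply h; eauto.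
Qed.

Definition lexp (f : omega_pow C) : C := epsilon (inhabits c0) (is_lexp f).

Lemma lexp_spec f : is_lexp f (lexp f).
Proof. unfold lexp. apply epsilon_spec. apply is_lexp_exists. Qed.

Lemma lexp_nonzero f : (exists d, coef f d <> 0) -> coef f (lexp f) <> 0 /\ forall d, lt d (lexp f) -> coef f d = 0.
Proof.
  intros [d hd]. destruct (lexp_spec f) as [h|[h _]]; [auto|]. exfalso. rewrite h in hd. lia.
Qed.

Lemma lexp_ozero f : (forall d, coef f d = 0) -> lexp f = c0.
Proof. intro h. destruct (lexp_spec f) as [[h1 _]|[_ h2]]; auto. rewrite h in h1. lia. Qed.

Lemma lexp_eq f c : coef f c <> 0 -> (forall d, lt d c -> coef f d = 0) -> lexp f = c.
Proof.
  intros h1 h2. destruct (lexp_nonzero f (ex_intro _ c h1)) as [k1 k2].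
  destruct (wo_trichotomy HC (lexp f) c) as [h|[h|h]]; auto.
  - rewrite h2 in k1; auto. lia.
  - rewrite k2 in h1; auto. lia.
Qed.

Lemma lexp_le f d : coef f d <> 0 -> le (lexp f) d.
Proof.
  intro h. destruct (lexp_nonzero f (ex_intro _ d h)) as [k1 k2].
  apply (wo_not_lt_le HC). intro e. rewrite k2 in h; auto.
Qed.

Lemma lexp_bump f b : lexp (bump f b) = b.
Proof.
  apply lexp_eq. { rewrite coef_bump_eq; lia. } intros d hd. apply coef_bump_lt; auto.
Qed.

Lemma bump_lt (l x : omega_pow C) b : lt l x -> lt b (lexp x) -> lt (bump l b) x.
Proof.
  intros h hb. destruct (opow_lt_elim C _ _ h) as [p [hp1 hp2]].
  assert (hx : coef x p <> 0) by lia.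
  assert (hbp : lt b p) by (apply (wo_lt_le_trans HC hb (lexp_le x p hx))).
  apply (opow_lt_intro C _ _ p).
  - rewrite coef_bump_gt; auto.
  - intros y hy. rewrite coef_bump_gt; auto. apply (wo_trans HC hbp hy).
Qed.

Definition lexp_pred (f : omega_pow C) : omega_pow C := set_coef f (lexp f) (coef f (lexp f) - 1).

Lemma lexp_pred_lt (x : omega_pow C) : x <> ozero -> lt (lexp_pred x) x.
Proof.
  intro hx. destruct (lexp_nonzero x (nonzero_coef x hx)) as [k1 k2].
  apply (opow_lt_intro C _ _ (lexp x)).
  - unfold lexp_pred. rewrite coef_set_eq. lia.
  - intros y hy. unfold lexp_pred. rewrite coef_set_ne; auto. intro e; subst; apply (wo_irrefl HC _ hy).
Qed.

Lemma lexp_between_pred (x y : omega_pow C) : x <> ozero -> lt (lexp_pred x) y -> lt y x -> lt (lexp y) (lexp x).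
Proof.
  intros hx h1 h2. destruct (lexp_nonzero x (nonzero_coef x hx)) as [k1 k2]. set (m := lexp x) in *.
  destruct (opow_lt_elim C _ _ h2) as [p [hp1 hp2]].
  destruct (opow_lt_elim C _ _ h1) as [q [hq1 hq2]].
  assert (prm : forall z, z <> m -> coef (lexp_pred x) z = coef x z).
  { intros z hz. unfold lexp_pred. rewrite coef_set_ne; auto. }
  assert (prm' : coef (lexp_pred x) m = coef x m - 1) by (unfold lexp_pred; rewrite coef_set_eq; auto).
  assert (hpm : p = m).
  { destruct (wo_trichotomy HC p m) as [a1|[a1|a1]]; auto.
    - rewrite k2 in hp1; auto. lia.
    - exfalso. destruct (wo_trichotomy HC q p) as [a2|[a2|a2]].
      + pose proof (hq2 p a2) as e. rewrite prm in e; [lia|].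
        intro e'; subst; apply (wo_irrefl HC _ a1).
      + subst q. rewrite prm in hq1; [lia|]. intro e; subst. apply (wo_irrefl HC _ a1).
      + pose proof (hp2 q a2) as e. rewrite prm in hq1; [lia|].
        intro e'; subst. apply (wo_asym HC a1 a2). }
  subst p.
  assert (hqm : lt q m).
  { destruct (wo_trichotomy HC q m) as [a1|[a1|a1]]; auto.
    - subst q. rewrite prm' in hq1. lia.
    - pose proof (hp2 q a1) as e. rewrite prm in hq1; [lia|]. intro e'; subst. apply (wo_irrefl HC _ a1). }
  rewrite prm in hq1 by (intro e; subst; apply (wo_irrefl HC _ hqm)).
  rewrite k2 in hq1 by auto.
  apply (wo_le_lt_trans HC (lexp_le y q ltac:(lia)) hqm).
Qed.

Lemma lexp_near (x y : omega_pow C) : y <> x -> (x <> ozero -> lt (lexp_pred x) y) -> lt y (osucc x) -> lt (lexp y) (lexp x).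
Proof.
  intros hne hpr hsc. destruct (wo_trichotomy (omega_pow_is_ordinal C HC) y x) as [e|[e|e]].
  - assert (hx : x <> ozero) by (intro h; subst; apply (not_lt_ozero _ e)).
    apply lexp_between_pred; auto.
  - congruence.
  - exfalso. apply (wo_le_not_lt (omega_pow_is_ordinal C HC) (osucc_le _ _ e) hsc).
Qed.

Section Segment.
Variable g0 : omega_pow C.
Let HO := omega_pow_is_ordinal C HC.

Definition lexp_seg (x : segment (omega_pow C) g0) : C := lexp (proj1_sig x).

Lemma lexp_seg_acc_point (x : segment (omega_pow C) g0) b :
  lt b (lexp_seg x) -> acc_point_interval _ x (fun y => le b (lexp_seg y)).
Proof.
  destruct x as [x hxg]. unfold lexp_seg; simpl. intros hb lo hi [h1 h2].
  set (l := match lo with Some l => proj1_sig l | None => ozero end).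
  assert (hl : lt l x).
  { destruct lo as [l0|]; [exact h1|].
    apply ozero_lt. intro e. subst x. rewrite lexp_ozero in hb by (intro; apply coef_ozero).
    apply (wo_le_not_lt HC (Hc0 b) hb). }
  assert (hy : lt (bump l b) x) by (apply bump_lt; auto).
  exists (exist _ (bump l b) (wo_trans HO hy hxg)). split; [|split; [split|]].
  - intro e. apply (f_equal (@proj1_sig _ _)) in e. simpl in e. rewrite e in hy.
    apply (wo_irrefl HO _ hy).
  - destruct lo as [l0|]; [apply lt_bump|exact I].
  - destruct hi as [h0|]; [apply (wo_trans HO hy h2)|exact I].
  - simpl. rewrite lexp_bump. right; auto.
Qed.

Lemma lexp_seg_lower_neighbourhood (x : segment (omega_pow C) g0) :
  exists lo : option (segment (omega_pow C) g0),
    in_interval _ lo None x /\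
    forall y, in_interval _ lo None y -> proj1_sig x <> ozero -> lt (lexp_pred (proj1_sig x)) (proj1_sig y).
Proof.
  destruct x as [x hxg]; simpl. destruct (classic (x = ozero)) as [hz|hz].
  - exists None. split; [split; exact I|]. intros y _ e. contradiction.
  - assert (hp : lt (lexp_pred x) g0) by apply (wo_trans HO (lexp_pred_lt x hz) hxg).
    exists (Some (exist _ (lexp_pred x) hp)). split; [split; [apply lexp_pred_lt; auto|exact I]|].
    intros y [hy _] _. exact hy.
Qed.

Lemma lexp_seg_upper_neighbourhood (x : segment (omega_pow C) g0) :
  exists hi : option (segment (omega_pow C) g0),
    in_interval _ None hi x /\ forall y, in_interval _ None hi y -> lt (proj1_sig y) (osucc (proj1_sig x)).
Proof.
  destruct x as [x hxg]; simpl. destruct (classic (lt (osucc x) g0)) as [hs|hs].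
  - exists (Some (exist _ (osucc x) hs)). split; [split; [exact I|apply lt_osucc]|].
    intros y [_ hy]. exact hy.
  - exists None. split; [split; exact I|]. intros [y hy] _. change (@lt (omega_pow C) y (osucc x)). change (@lt (omega_pow C) y g0) in hy.
    destruct (wo_trichotomy HO (osucc x) g0) as [e|[e|e]]; [tauto|rewrite e; auto|].
    apply (wo_trans HO hy e).
Qed.

(* Between the predecessor and the successor of x at its least exponent, every
   other point has a smaller least exponent. *)
Lemma lexp_seg_isolating_interval (x : segment (omega_pow C) g0) :
  exists lo hi, in_interval _ lo hi x /\
    forall y, in_interval _ lo hi y -> y <> x -> lt (lexp_seg y) (lexp_seg x).
Proof.
  destruct (lexp_seg_lower_neighbourhood x) as [lo [[hlo _] Hlo]].
  destruct (lexp_seg_upper_neighbourhood x) as [hi [[_ hhi] Hhi]].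
  exists lo, hi. split; [split; auto|]. intros y [hy1 hy2] hne.
  apply lexp_near.
  - intro e. apply hne. apply sig_eq. exact e.
  - apply Hlo. split; [exact hy1|exact I].
  - apply Hhi. split; [exact I|exact hy2].
Qed.

Lemma lexp_rank_function : rank_function (segment (omega_pow C) g0) C lexp_seg.
Proof.
  intros x z. rewrite <- acc_point_interval_iff. split; [apply lexp_seg_acc_point|].
  intro H. apply NNPP. intro hn. apply (wo_not_lt_le HC) in hn.
  destruct (lexp_seg_isolating_interval x) as [lo [hi [hx Hlt]]].
  destruct (H lo hi hx) as [y [hne [hy hzy]]].
  apply (wo_le_not_lt HC hzy). apply (wo_lt_le_trans HC (Hlt y hy hne) hn).
Qed.

End Segment.

End OmegaPowerOps.
Arguments ozero {C}.
Arguments set_coef {C}.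
Arguments monom {C}.
Arguments bump {C}.
Arguments osucc {C}.
Arguments lexp {C}.
Arguments lexp_pred {C}.
Arguments lexp_seg {C}.

(** * Initial segments of omega^C *)

Section InitialSegments.
Variable C : LO.
Hypothesis HC : is_ordinal C.
Let HO := omega_pow_is_ordinal C HC.
Implicit Types (a b m y w : C).

Definition extend_fun (b : C) (f : omega_pow (segment C b)) : C -> nat :=
  fun y => match excluded_middle_informative (lt y b) with
           | left p => coef f (exist _ y p)
           | right _ => 0 end.

Lemma extend_support b f : exists l, forall y, extend_fun b f y <> 0 -> In y l.
Proof.
  destruct (coef_support _ f) as [l hl]. exists (map (@proj1_sig _ _) l). intros y hy.
  unfold extend_fun in hy. destruct (excluded_middle_informative (lt y b)) as [p|np]; [|lia].
  apply hl in hy. apply (in_map (@proj1_sig _ _)) in hy. exact hy.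
Qed.

Definition extend b f : omega_pow C := mk_opow (extend_fun b f) (extend_support b f).

Lemma coef_extend_lt b f y (p : lt y b) : coef (extend b f) y = coef f (exist _ y p).
Proof.
  unfold extend. rewrite coef_mk_opow. unfold extend_fun.
  destruct (excluded_middle_informative (lt y b)) as [p'|np]; [|tauto].
  f_equal. apply sig_eq. reflexivity.
Qed.

Lemma coef_extend_nlt b f y : ~ lt y b -> coef (extend b f) y = 0.
Proof.
  intro h. unfold extend. rewrite coef_mk_opow. unfold extend_fun.
  destruct (excluded_middle_informative (lt y b)) as [p'|np]; tauto.
Qed.

Lemma restrict_support b (F : omega_pow C) :
  exists l, forall a : segment C b, coef F (proj1_sig a) <> 0 -> In a l.
Proof.
  apply (support_pull (@proj1_sig _ _) (fun (u v : segment C b) e => sig_eq u v e) (coef F)). apply coef_support.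
Qed.

Definition restrict b (F : omega_pow C) : omega_pow (segment C b) :=
  mk_opow (fun a : segment C b => coef F (proj1_sig a)) (restrict_support b F).

Lemma coef_restrict b F (x : segment C b) : coef (restrict b F) x = coef F (proj1_sig x).
Proof. reflexivity. Qed.

(* [place b a i f] is omega^a * i + f, for f in omega^b with b <= a. *)
Definition place (b a : C) (i : nat) (f : omega_pow (segment C b)) : omega_pow C := set_coef (extend b f) a i.

Lemma place_above b a i f y : le b a -> lt a y -> coef (place b a i f) y = 0.
Proof.
  intros hb hy. unfold place. rewrite coef_set_ne by (apply (wo_gt_neq HC); auto).
  apply coef_extend_nlt. intro h. apply (wo_asym HC hy). apply (wo_lt_le_trans HC h hb).
Qed.

Lemma place_at b a i f : coef (place b a i f) a = i.
Proof. unfold place. apply coef_set_eq. Qed.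

Lemma place_lt_monom a i k f : i < k -> lt (place a a i f) (monom a k).
Proof.
  intro h. apply (opow_lt_intro C _ _ a).
  - rewrite place_at, coef_monom_eq. auto.
  - intros y hy. rewrite place_above, coef_monom_ne; auto. apply (wo_gt_neq HC); auto. right; auto.
Qed.

Lemma place_lt_index b a i j f g : le b a -> i < j -> lt (place b a i f) (place b a j g).
Proof.
  intros hb h. apply (opow_lt_intro C _ _ a).
  - rewrite !place_at. auto.
  - intros y hy. rewrite !place_above; auto.
Qed.

Lemma place_lt_fun b a i f g : le b a -> lt f g -> lt (place b a i f) (place b a i g).
Proof.
  intros hb h. destruct (opow_lt_elim _ _ _ h) as [[p hp] [h1 h2]].
  assert (hpa : p <> a) by (apply (wo_lt_neq HC); apply (wo_lt_le_trans HC hp hb)).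
  apply (opow_lt_intro C _ _ p).
  - unfold place. rewrite !coef_set_ne by auto. rewrite !(coef_extend_lt b _ p hp). auto.
  - intros y hy. unfold place. rewrite !coef_set.
    destruct (dec (y = a)); auto.
    destruct (classic (lt y b)) as [hyb|hyb].
    + rewrite !(coef_extend_lt b _ y hyb). apply h2. exact hy.
    + rewrite !coef_extend_nlt; auto.
Qed.

Lemma opow_lt_elim_nz (F G : omega_pow C) : lt F G -> exists w, coef G w <> 0 /\ coef F w < coef G w /\ forall y, lt w y -> coef F y = coef G y.
Proof. intro h. destruct (opow_lt_elim _ _ _ h) as [w [h1 h2]]. exists w. split; [lia|]. auto. Qed.

Lemma lt_monom_inv (F : omega_pow C) a n : lt F (monom a n) -> supported_upto a F /\ coef F a < n.
Proof.
  intro h. destruct (opow_lt_elim_nz _ _ h) as [w [h0 [h1 h2]]].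
  assert (w = a). { apply NNPP. intro e. rewrite coef_monom_ne in h0; auto. }
  subst w. rewrite coef_monom_eq in h1. split; auto.
  intros y hy. rewrite h2, coef_monom_ne; auto. apply (wo_gt_neq HC); auto.
Qed.

Lemma place_restrict a (F : omega_pow C) : supported_upto a F -> place a a (coef F a) (restrict a F) = F.
Proof.
  intros h. apply opow_ext. intro y. unfold place. rewrite coef_set.
  destruct (dec_spec (y = a)) as [[e1 e2]|[e1 e2]]; rewrite e2; [subst; auto|].
  destruct (classic (lt y a)) as [hy|hy].
  - rewrite (coef_extend_lt a _ y hy). rewrite coef_restrict. reflexivity.
  - rewrite coef_extend_nlt; auto. symmetry. apply h.
    destruct (wo_trichotomy HC a y) as [q|[q|q]]; auto; [congruence|tauto].
Qed.

Theorem monom_segment_iso (a : C) (k : nat) :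
  ord_iso (mul_nat (omega_pow (segment C a)) k) (segment (omega_pow C) (monom a k)).
Proof.
  set (phi := fun p : mul_nat (omega_pow (segment C a)) k =>
     exist (fun F => lt F (monom a k)) (place a a (proj1_sig (fst p)) (snd p))
           (place_lt_monom a _ k (snd p) (proj2_sig (fst p))) : segment (omega_pow C) (monom a k)).
  apply (@iso_of_surj _ _ (mul_nat_is_ordinal _ k (omega_pow_is_ordinal _ (segment_is_ordinal a HC)))
                       (segment_is_ordinal _ HO) phi).
  - intros [[i pi] f] [[j pj] g]. simpl. intros [h|[h1 h2]].
    + apply place_lt_index; auto. right; auto.
    + subst j. apply place_lt_fun; auto. right; auto.
  - intros [F hF]. destruct (lt_monom_inv F a k hF) as [h1 h2].
    exists (exist (fun i => i < k) (coef F a) h2, restrict a F). apply sig_eq. simpl.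
    apply place_restrict; auto.
Qed.

Definition monom_plus a m (k : nat) : omega_pow C := set_coef (monom a k) m 1.

Lemma coef_monom_plus_high a m k : lt m a -> coef (monom_plus a m k) a = k.
Proof. intro hm. unfold monom_plus. rewrite coef_set_ne, coef_monom_eq; auto. apply (wo_gt_neq HC hm). Qed.

Lemma coef_monom_plus_low a m k : coef (monom_plus a m k) m = 1.
Proof. apply coef_set_eq. Qed.

Lemma coef_monom_plus_other a m k y : y <> m -> y <> a -> coef (monom_plus a m k) y = 0.
Proof. intros h1 h2. unfold monom_plus. rewrite coef_set_ne, coef_monom_ne; auto. Qed.

Lemma place_lt_monom_plus a m i k f : lt m a -> i < k -> lt (place a a i f) (monom_plus a m k).
Proof.
  intros hm h. apply (opow_lt_intro C _ _ a); [rewrite place_at, coef_monom_plus_high; auto|].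
  intros y hy. rewrite (place_above a a i f y (or_intror eq_refl) hy), coef_monom_plus_other; auto.
  - apply (wo_gt_neq HC (wo_trans HC hm hy)).
  - apply (wo_gt_neq HC hy).
Qed.

Lemma monom_lt_monom_plus a m k : lt m a -> lt (monom a k) (monom_plus a m k).
Proof.
  intros hm. apply (opow_lt_intro C _ _ m).
  - rewrite coef_monom_plus_low, coef_monom_ne by apply (wo_lt_neq HC hm). auto.
  - intros y hy. unfold monom_plus. rewrite coef_set_ne; auto. apply (wo_gt_neq HC hy).
Qed.

Lemma place_low_lt_monom_plus a m k g : lt m a -> lt (place m a k g) (monom_plus a m k).
Proof.
  intros hm. apply (opow_lt_intro C _ _ m).
  - unfold place. rewrite coef_set_ne by apply (wo_lt_neq HC hm).
    rewrite coef_extend_nlt, coef_monom_plus_low by apply (wo_irrefl HC). auto.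
  - intros y hy. unfold place, monom_plus. rewrite !coef_set, (dec_false (y = m)) by apply (wo_gt_neq HC hy).
    destruct (dec_spec (y = a)) as [[e1 e2]|[e1 e2]]; rewrite e2; [subst; rewrite coef_monom_eq; auto|].
    rewrite coef_monom_ne, coef_extend_nlt; auto. apply (wo_asym HC hy).
Qed.

Lemma lt_monom_plus_inv a m k (F : omega_pow C) : lt m a -> lt F (monom_plus a m k) ->
  (supported_upto a F /\ coef F a < k) \/ F = place m a k (restrict m F).
Proof.
  intros hm hF. destruct (opow_lt_elim_nz _ _ hF) as [w [h0 [h1 h2]]].
  assert (hw : w = m \/ w = a).
  { destruct (classic (w = m)); auto. destruct (classic (w = a)); auto.
    rewrite coef_monom_plus_other in h0; tauto. }
  assert (habove : supported_upto a F).
  { intros y hy. rewrite h2, coef_monom_plus_other; auto.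
    - apply (wo_gt_neq HC (wo_trans HC hm hy)).
    - apply (wo_gt_neq HC hy).
    - destruct hw; subst; [apply (wo_trans HC hm hy)|exact hy]. }
  destruct hw; subst w; [right|left].
  - rewrite coef_monom_plus_low in h1. apply opow_ext. intro y. unfold place. rewrite coef_set.
    destruct (dec_spec (y = a)) as [[e1 e2]|[e1 e2]]; rewrite e2; [subst; rewrite h2, coef_monom_plus_high; auto|].
    destruct (wo_trichotomy HC y m) as [q|[q|q]].
    + rewrite (coef_extend_lt m _ y q), coef_restrict. reflexivity.
    + subst y. rewrite coef_extend_nlt by apply (wo_irrefl HC). lia.
    + rewrite coef_extend_nlt by apply (wo_asym HC q). rewrite h2, coef_monom_plus_other; auto.
      apply (wo_gt_neq HC q).
  - rewrite coef_monom_plus_high in h1; auto.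
Qed.

Lemma place_bottom b a k f : (forall y, ~ lt y b) -> place b a k f = monom a k.
Proof.
  intro hb. apply opow_ext. intro y. unfold place, monom. rewrite !coef_set.
  destruct (dec (y = a)); auto. rewrite coef_extend_nlt, coef_ozero; auto.
Qed.

Theorem monom_plus_one_segment_iso (a c0 : C) (k : nat) (hc : lt c0 a) (Hc0 : forall y, le c0 y) :
  ord_iso (succ (mul_nat (omega_pow (segment C a)) k)) (segment (omega_pow C) (monom_plus a c0 k)).
Proof.
  set (g1 := monom_plus a c0 k).
  set (phi := fun p : succ (mul_nat (omega_pow (segment C a)) k) =>
     match p with
     | Some q => exist (fun F => lt F g1) (place a a (proj1_sig (fst q)) (snd q))
                       (place_lt_monom_plus a c0 _ k (snd q) hc (proj2_sig (fst q)))
     | None => exist (fun F => lt F g1) (monom a k) (monom_lt_monom_plus a c0 k hc)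
     end : segment (omega_pow C) g1).
  apply (@iso_of_surj _ _ (succ_is_ordinal _ (mul_nat_is_ordinal _ k (omega_pow_is_ordinal _ (segment_is_ordinal a HC))))
                       (segment_is_ordinal _ HO) phi).
  - intros [[[i pi] f]|] [[[j pj] g]|]; simpl; try tauto.
    + intros [h|[h1 h2]].
      * apply place_lt_index; auto. right; auto.
      * subst j. apply place_lt_fun; auto. right; auto.
    + intros _. apply place_lt_monom; auto.
  - intros [F hF]. destruct (lt_monom_plus_inv a c0 k F hc hF) as [[ha hk]|e].
    + exists (Some (exist (fun i => i < k) (coef F a) hk, restrict a F)). apply sig_eq. simpl.
      apply place_restrict; auto.
    + exists None. apply sig_eq. simpl. rewrite e, place_bottom; auto.
      intros y hy. apply (wo_le_not_lt HC (Hc0 y) hy).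
Qed.

Theorem monom_plus_segment_iso (a m : C) (k : nat) (hm : lt m a) :
  ord_iso (osum (mul_nat (omega_pow (segment C a)) k) (omega_pow (segment C m)))
          (segment (omega_pow C) (monom_plus a m k)).
Proof.
  set (g1 := monom_plus a m k).
  set (phi := fun p : osum (mul_nat (omega_pow (segment C a)) k) (omega_pow (segment C m)) =>
     match p with
     | inl q => exist (fun F => lt F g1) (place a a (proj1_sig (fst q)) (snd q))
                       (place_lt_monom_plus a m _ k (snd q) hm (proj2_sig (fst q)))
     | inr g => exist (fun F => lt F g1) (place m a k g) (place_low_lt_monom_plus a m k g hm)
     end : segment (omega_pow C) g1).
  apply (@iso_of_surj _ _ (osum_is_ordinal _ _ (mul_nat_is_ordinal _ k (omega_pow_is_ordinal _ (segment_is_ordinal a HC)))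
                                  (omega_pow_is_ordinal _ (segment_is_ordinal m HC)))
                       (segment_is_ordinal _ HO) phi).
  - intros [[[i pi] f]|g] [[[j pj] g']|g']; simpl; try tauto.
    + intros [h|[h1 h2]].
      * apply place_lt_index; auto. right; auto.
      * subst j. apply place_lt_fun; auto. right; auto.
    + intros _. apply (opow_lt_intro C (place a a i f) (place m a k g') a).
      * rewrite !place_at. auto.
      * intros y hy. rewrite (place_above a a i f y (or_intror eq_refl) hy), (place_above m a k g' y (or_introl hm) hy). auto.
    + intros h. apply place_lt_fun; auto. left; auto.
  - intros [F hF]. destruct (lt_monom_plus_inv a m k F hm hF) as [[ha hk]|e].
    + exists (inl (exist (fun i => i < k) (coef F a) hk, restrict a F)). apply sig_eq. simpl.
      apply place_restrict; auto.
    + exists (inr (restrict m F)). apply sig_eq. simpl. symmetry. exact e.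
Qed.

End InitialSegments.
Arguments monom_plus {C}.
Arguments extend {C}.
Arguments restrict {C}.
Arguments place {C}.

Section Interval.
Variable C : LO.
Hypothesis HC : is_ordinal C.
Let HO := omega_pow_is_ordinal C HC.

Definition plus_monom_at (m : C) (u v : omega_pow C) :=
  (forall d, lt d m -> coef u d = 0) /\ coef v m = coef u m + 1 /\ (forall y, y <> m -> coef v y = coef u y).

Definition interval (u v : omega_pow C) : LO := sub (omega_pow C) (fun f => lt u f /\ lt f v).

Lemma interval_plus_monom_char (u v f : omega_pow C) (m : C) : plus_monom_at m u v ->
  (lt u f /\ lt f v <-> (forall y, le m y -> coef f y = coef u y) /\ exists q, lt q m /\ coef f q <> 0).
Proof.
  intros [hu [hvm hv]]. split.
  - intros [h1 h2]. destruct (opow_lt_elim _ _ _ h1) as [q [hq1 hq2]]. destruct (opow_lt_elim _ _ _ h2) as [p [hp1 hp2]].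
    assert (hpm : p = m).
    { destruct (wo_trichotomy HC p m) as [a1|[a1|a1]]; auto.
      - pose proof (hv p (wo_lt_neq HC a1)) as e1. pose proof (hu p a1) as e2. lia.
      - exfalso. pose proof (hv p (wo_gt_neq HC a1)) as e1.
        destruct (wo_trichotomy HC q p) as [a2|[a2|a2]].
        + pose proof (hq2 p a2). lia.
        + subst q. lia.
        + pose proof (hp2 q a2). pose proof (hv q (wo_gt_neq HC (wo_trans HC a1 a2))). lia. }
    subst p.
    assert (hqm : lt q m).
    { destruct (wo_trichotomy HC q m) as [a1|[a1|a1]]; auto.
      - subst q. exfalso. lia.
      - exfalso. pose proof (hp2 q a1). pose proof (hv q (wo_gt_neq HC a1)). lia. }
    split.
    + intros y [hy|hy].
      * rewrite hp2 by auto. apply hv. apply (wo_gt_neq HC hy).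
      * subst y. symmetry. apply hq2. auto.
    + exists q. split; auto. lia.
  - intros [h1 [q [hq1 hq2]]]. split.
    + assert (hne : u <> f). { intro e; subst. rewrite hu in hq2; auto. }
      destruct (opow_last_difference _ HC _ _ hne) as [p [hp1 hp2]].
      apply (opow_lt_intro C _ _ p); auto.
      assert (hpm : lt p m).
      { destruct (wo_trichotomy HC p m) as [a1|[a1|a1]]; auto; exfalso; apply hp1; symmetry; apply h1;
          [right|left]; auto. }
      rewrite hu in hp1 |- *; auto. lia.
    + apply (opow_lt_intro C _ _ m).
      * rewrite h1, hvm by (right; auto). lia.
      * intros y hy. rewrite h1 by (left; auto). rewrite hv; auto. apply (wo_gt_neq HC hy).
Qed.

Definition splice_fun (m : C) (f u : omega_pow C) : C -> nat :=
  fun y => if dec (lt y m) then coef f y else coef u y.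

Lemma splice_support m f u : exists l, forall y, splice_fun m f u y <> 0 -> In y l.
Proof. apply (support_bound C f u _ nil). intro y. unfold splice_fun. destruct (dec (lt y m)); auto. Qed.

Definition splice m f u : omega_pow C := mk_opow (splice_fun m f u) (splice_support m f u).

Lemma coef_splice_lt m f u y : lt y m -> coef (splice m f u) y = coef f y.
Proof. intro h. unfold splice. rewrite coef_mk_opow. unfold splice_fun. rewrite dec_true; auto. Qed.

Lemma coef_splice_ge m f u y : le m y -> coef (splice m f u) y = coef u y.
Proof.
  intro h. unfold splice. rewrite coef_mk_opow. unfold splice_fun. rewrite dec_false; auto.
  apply (wo_le_not_lt HC h).
Qed.

Lemma splice_in_interval m (u1 v1 u2 v2 f : omega_pow C) : plus_monom_at m u1 v1 -> plus_monom_at m u2 v2 ->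
  lt u1 f /\ lt f v1 -> lt u2 (splice m f u2) /\ lt (splice m f u2) v2.
Proof.
  intros h1 h2 hf. apply (interval_plus_monom_char u2 v2 _ m h2).
  apply (interval_plus_monom_char u1 v1 f m h1) in hf. destruct hf as [_ [q [k2 k3]]].
  split; [intros y hy; apply coef_splice_ge; auto|].
  exists q. split; auto. rewrite coef_splice_lt; auto.
Qed.

Lemma interval_plus_monom_iso (u1 v1 u2 v2 : omega_pow C) (m : C) :
  plus_monom_at m u1 v1 -> plus_monom_at m u2 v2 -> ord_iso (interval u1 v1) (interval u2 v2).
Proof.
  intros h1 h2.
  set (phi := fun x : interval u1 v1 =>
     exist (fun f => lt u2 f /\ lt f v2) (splice m (proj1_sig x) u2)
       (splice_in_interval m u1 v1 u2 v2 (proj1_sig x) h1 h2 (proj2_sig x)) : interval u2 v2).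
  apply (@iso_of_surj _ _ (sub_is_ordinal _ HO) (sub_is_ordinal _ HO) phi).
  - intros [f1 hf1] [f2 hf2] h. change (lt (splice m f1 u2) (splice m f2 u2)). change (lt f1 f2) in h.
    apply (interval_plus_monom_char u1 v1 f1 m h1) in hf1. apply (interval_plus_monom_char u1 v1 f2 m h1) in hf2.
    destruct hf1 as [k1 _], hf2 as [k2 _]. destruct (opow_lt_elim _ _ _ h) as [p [hp1 hp2]].
    assert (hpm : lt p m).
    { apply NNPP. intro e. apply (wo_not_lt_le HC) in e. rewrite k1, k2 in hp1; auto. lia. }
    apply (opow_lt_intro C _ _ p); [rewrite !coef_splice_lt; auto|].
    intros y hy. destruct (classic (lt y m)) as [hym|hym].
    + rewrite !coef_splice_lt; auto.
    + rewrite !coef_splice_ge; auto; apply (wo_not_lt_le HC hym).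
  - intros [F hF]. exists (exist _ (splice m F u1) (splice_in_interval m u2 v2 u1 v1 F h2 h1 hF)).
    apply sig_eq. simpl. apply (interval_plus_monom_char u2 v2 F m h2) in hF. destruct hF as [k1 _].
    apply opow_ext. intro y. destruct (classic (lt y m)) as [hym|hym].
    + rewrite !coef_splice_lt; auto.
    + assert (hmy : le m y) by apply (wo_not_lt_le HC hym).
      rewrite coef_splice_ge by exact hmy. symmetry. apply k1, hmy.
Qed.

End Interval.
Arguments plus_monom_at {C}.
Arguments interval {C}.
Arguments splice {C}.

Section Shift.
Variable C : LO.
Hypothesis HC : is_ordinal C.
Let HO := omega_pow_is_ordinal C HC.
Variable t : C.
Variable n : nat.

Definition shift_fun (p : omega_pow C) : C -> nat :=
  fun y => if dec (supported_upto t p) then (if dec (y = t) then coef p t + n else coef p y) else coef p y.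

Lemma shift_support p : exists l, forall y, shift_fun p y <> 0 -> In y l.
Proof.
  apply (support_bound C p p _ [t]). intro y. unfold shift_fun.
  destruct (dec (supported_upto t p)); auto. destruct (dec_spec (y = t)) as [[e1 e2]|[e1 e2]]; rewrite e2; auto.
  subst; simpl; auto.
Qed.

Definition shift p : omega_pow C := mk_opow (shift_fun p) (shift_support p).

Lemma coef_shift_supported p y : supported_upto t p ->
  coef (shift p) y = if dec (y = t) then coef p t + n else coef p y.
Proof. intro h. unfold shift. rewrite coef_mk_opow. unfold shift_fun. rewrite dec_true; auto. Qed.

Lemma shift_unsupported p : ~ supported_upto t p -> shift p = p.
Proof. intro h. apply opow_ext. intro y. unfold shift. rewrite coef_mk_opow. unfold shift_fun. rewrite dec_false; auto. Qed.

Lemma supported_lt_unsupported (u p : omega_pow C) : supported_upto t u -> ~ supported_upto t p -> lt u p.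
Proof.
  intros hu hp. destruct (wo_trichotomy HO u p) as [e|[e|e]]; auto; exfalso.
  - subst. auto.
  - apply hp. destruct (opow_lt_elim _ _ _ e) as [w [h1 h2]]. intros z hz.
    assert (hw : ~ lt t w). { intro h. rewrite hu in h1; auto. lia. }
    rewrite h2, hu; auto.
    destruct (wo_trichotomy HC w z) as [q|[q|q]]; auto.
    + subst; tauto.
    + exfalso. apply hw. apply (wo_trans HC hz q).
Qed.

Lemma shift_supported p : supported_upto t p -> supported_upto t (shift p).
Proof. intros h z hz. rewrite coef_shift_supported, dec_false; auto. apply (wo_gt_neq HC hz). Qed.

Lemma shift_smono : smono shift.
Proof.
  intros p1 p2 h. destruct (classic (supported_upto t p1)) as [l1|l1]; destruct (classic (supported_upto t p2)) as [l2|l2].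
  - destruct (opow_lt_elim _ _ _ h) as [w [h1 h2]]. apply (opow_lt_intro C _ _ w).
    + rewrite !coef_shift_supported; auto. destruct (dec_spec (w = t)) as [[e1 e2]|[e1 e2]]; rewrite e2; [subst|]; lia.
    + intros y hy. rewrite !coef_shift_supported; auto.
      destruct (dec_spec (y = t)) as [[e1 e2]|[e1 e2]]; rewrite e2; [subst; rewrite h2; auto|auto].
  - apply supported_lt_unsupported; auto. apply shift_supported; auto. rewrite shift_unsupported; auto.
  - exfalso. apply (wo_asym HO h). apply supported_lt_unsupported; auto.
  - rewrite !shift_unsupported; auto.
Qed.

Lemma lt_shift (u p : omega_pow C) : supported_upto t u -> n = coef u t + 1 -> lt u (shift p).
Proof.
  intros hu hn. destruct (classic (supported_upto t p)) as [l|l].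
  - apply (opow_lt_intro C _ _ t).
    + rewrite coef_shift_supported, dec_true; auto. lia.
    + intros y hy. rewrite coef_shift_supported, dec_false, hu, l; auto. apply (wo_gt_neq HC hy).
  - rewrite shift_unsupported; auto. apply supported_lt_unsupported; auto.
Qed.

Lemma shift_le_monom (p : omega_pow C) a k : lt t a -> 1 <= k -> le p (monom a k) -> le (shift p) (monom a k).
Proof.
  intros hta hk hp. destruct (classic (supported_upto t p)) as [l|l]; [left|rewrite shift_unsupported; auto].
  apply (opow_lt_intro C _ _ a).
  - rewrite (coef_shift_supported p a l), (dec_false (a = t) (wo_gt_neq HC hta)), (l a hta), coef_monom_eq. lia.
  - intros y hy. assert (hty : lt t y) by (apply (wo_trans HC hta hy)).
    rewrite (coef_shift_supported p y l), (dec_false (y = t) (wo_gt_neq HC hty)), (l y hty).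
    rewrite coef_monom_ne; auto. apply (wo_gt_neq HC hy).
Qed.

End Shift.
Arguments shift {C}.

Lemma sub_split_iso (X : LO) (HX : is_ordinal X) (R : X -> Prop) (c : X) : (forall x, le x c -> R x) ->
  ord_iso (sub X R) (osum (sub X (fun x => le x c)) (sub X (fun x => lt c x /\ R x))).
Proof.
  intro hc. apply (partition_iso X HX).
  - intro f. split.
    + intro h. destruct (wo_trichotomy HX f c) as [e|[e|e]]; [left; left|left; right|right]; auto.
    + intros [e|[e1 e2]]; auto.
  - intros x y hx [hy _]. apply (wo_le_lt_trans HX hx hy).
Qed.

(* Here g0 has leading term omega^a * k and lowest exponent m < a, and
   g0 = gpred + omega^m. *)
Section LowestTerm.
Variable C : LO.
Hypothesis HC : is_ordinal C.
Let HO := omega_pow_is_ordinal C HC.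
Variable g0 : omega_pow C.
Variables a m : C.
Variable k : nat.
Hypothesis ha : supported_upto a g0.
Hypothesis hk : coef g0 a = k.
Hypothesis hk1 : 1 <= k.
Hypothesis hm1 : coef g0 m <> 0.
Hypothesis hm2 : forall d, lt d m -> coef g0 d = 0.
Hypothesis hma : lt m a.

Definition lead : omega_pow C := monom a k.
Definition gpred : omega_pow C := set_coef g0 m (coef g0 m - 1).

Definition Initial := sub (omega_pow C) (fun f => le f lead).
Definition Middle := sub (omega_pow C) (fun f => lt lead f /\ le f gpred).

Lemma coef_gpred_ne y : y <> m -> coef gpred y = coef g0 y.
Proof. apply coef_set_ne. Qed.

Lemma coef_gpred_lead : coef gpred a = k.
Proof. rewrite coef_gpred_ne; auto. apply (wo_gt_neq HC hma). Qed.

Lemma gpred_supported : supported_upto a gpred.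
Proof. intros y h. rewrite coef_gpred_ne; auto. apply (wo_gt_neq HC (wo_trans HC hma h)). Qed.

Lemma gpred_plus_monom : plus_monom_at m gpred g0.
Proof.
  split; [|split].
  - intros d h. rewrite coef_gpred_ne; auto. apply (wo_lt_neq HC h).
  - unfold gpred. rewrite coef_set_eq. lia.
  - intros y hy. rewrite coef_gpred_ne; auto.
Qed.

Lemma lead_plus_monom : plus_monom_at m lead (monom_plus a m k).
Proof.
  split; [|split].
  - intros d h. unfold lead. rewrite coef_monom_ne; auto. apply (wo_lt_neq HC (wo_trans HC h hma)).
  - unfold lead. rewrite coef_monom_plus_low, coef_monom_ne; auto. apply (wo_lt_neq HC hma).
  - intros y hy. unfold monom_plus. rewrite coef_set_ne; auto.
Qed.

Lemma gpred_lt_g0 : lt gpred g0.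
Proof.
  apply (opow_lt_intro C _ _ m); [unfold gpred; rewrite coef_set_eq; lia|].
  intros y hy. apply coef_gpred_ne. apply (wo_gt_neq HC hy).
Qed.

Lemma lead_le_gpred : le lead gpred.
Proof.
  apply (wo_not_lt_le HO). intro h. apply lt_monom_inv in h; auto.
  destruct h as [_ h]. rewrite coef_gpred_lead in h. lia.
Qed.

Lemma segment_g0_split : ord_iso (segment (omega_pow C) g0) (osum (osum Initial Middle) (interval gpred g0)).
Proof.
  apply (iso_trans (sub_split_iso _ HO (fun f => lt f g0) gpred (fun x hx => wo_le_lt_trans HO hx gpred_lt_g0))).
  apply osum_iso; [|apply iso_refl].
  apply (iso_trans (sub_split_iso _ HO (fun f => le f gpred) lead (fun x hx => wo_le_trans HO hx lead_le_gpred))).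
  apply iso_refl.
Qed.

Lemma segment_lead_plus_split :
  ord_iso (segment (omega_pow C) (monom_plus a m k)) (osum Initial (interval lead (monom_plus a m k))).
Proof.
  apply (sub_split_iso _ HO (fun f => lt f (monom_plus a m k)) lead).
  intros x hx. apply (wo_le_lt_trans HO hx). apply (monom_lt_monom_plus C HC a m k hma).
Qed.

Lemma middle_shape (q : omega_pow C) : lt lead q -> le q gpred -> supported_upto a q /\ coef q a = k.
Proof.
  intros h1 h2.
  assert (za : supported_upto a q).
  { intros y hy. destruct h2 as [h2|h2]; [|subst; apply gpred_supported; auto].
    destruct (opow_lt_elim _ _ _ h2) as [w [k1 k2]].
    assert (hw : ~ lt a w) by (intro e; rewrite gpred_supported in k1; auto; lia).
    rewrite k2; [apply gpred_supported; auto|].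
    destruct (wo_trichotomy HC w y) as [e|[e|e]]; auto; [subst; tauto|].
    exfalso. apply hw. apply (wo_trans HC hy e). }
  split; auto.
  assert (qa : coef q a <= k).
  { destruct h2 as [h2|h2]; [|subst; rewrite coef_gpred_lead; auto].
    destruct (opow_lt_elim _ _ _ h2) as [w [k1 k2]].
    destruct (wo_trichotomy HC w a) as [e|[e|e]].
    - rewrite k2, coef_gpred_lead; auto.
    - subst. rewrite coef_gpred_lead in k1. lia.
    - rewrite gpred_supported in k1; auto. lia. }
  destruct (opow_lt_elim _ _ _ h1) as [w [k1 k2]]. unfold lead in k1, k2.
  destruct (wo_trichotomy HC w a) as [e|[e|e]].
  - rewrite <- k2 by auto. apply coef_monom_eq.
  - subst. rewrite coef_monom_eq in k1. lia.
  - rewrite za in k1; auto. lia.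
Qed.

Lemma lower_part_lt (q1 q2 : omega_pow C) : supported_upto a q1 -> supported_upto a q2 ->
  coef q1 a = coef q2 a -> lt q1 q2 -> lt (lower_part q1 a) (lower_part q2 a).
Proof.
  intros z1 z2 e h. destruct (opow_lt_elim _ _ _ h) as [w [k1 k2]].
  assert (hw : lt w a).
  { destruct (wo_trichotomy HC w a) as [q|[q|q]]; auto; exfalso.
    - subst. lia.
    - rewrite z1, z2 in k1; auto. lia. }
  apply (opow_lt_intro C _ _ w); [rewrite !coef_lower_part_lt; auto|].
  intros y hy. rewrite !coef_lower_part. destruct (dec (lt y a)); auto.
Qed.

Lemma lower_part_lt_lead (q : omega_pow C) : lt (lower_part q a) lead.
Proof.
  apply (opow_lt_intro C _ _ a).
  - rewrite (lower_part_supported_below C HC q a a (or_intror eq_refl)). unfold lead. rewrite coef_monom_eq. lia.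
  - intros y hy. rewrite (lower_part_supported_below C HC q a y (or_introl hy)). unfold lead.
    rewrite coef_monom_ne; auto. apply (wo_gt_neq HC hy).
Qed.

Lemma lower_part_middle_le (q : Middle) : le (lower_part (proj1_sig q) a) (lower_part gpred a).
Proof.
  destruct q as [q [k1 k2]]. simpl. destruct (middle_shape q k1 k2) as [z1 z2].
  destruct k2 as [k2|k2]; [left|right; subst; auto].
  apply lower_part_lt; auto using gpred_supported. rewrite coef_gpred_lead; auto.
Qed.

Lemma lower_part_gpred_bound : lt lead gpred -> exists t, lt t a /\ supported_upto t (lower_part gpred a).
Proof.
  intro hEh. destruct (opow_greatest_exponent C HC (lower_part gpred a)) as [t [ht1 ht2]].
  - destruct (opow_lt_elim _ _ _ hEh) as [w [k1 k2]]. unfold lead in k1.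
    assert (hw : lt w a).
    { destruct (wo_trichotomy HC w a) as [q|[q|q]]; auto; exfalso.
      - subst. rewrite coef_monom_eq, coef_gpred_lead in k1. lia.
      - rewrite gpred_supported in k1; auto. lia. }
    exists w. rewrite coef_lower_part_lt; auto. lia.
  - exists t. split; auto. apply NNPP. intro h.
    apply ht1, (lower_part_supported_below C HC gpred a t), (wo_not_lt_le HC h).
Qed.

Lemma middle_absorbed : ord_iso (osum Middle Initial) Initial.
Proof.
  assert (HP : is_ordinal Initial) by apply (sub_is_ordinal _ HO).
  assert (HQP : is_ordinal (osum Middle Initial)) by (apply osum_is_ordinal; auto; apply (sub_is_ordinal _ HO)).
  apply iso_sym. destruct (classic (lt lead gpred)) as [hEh|hQ].
  2:{ apply (@iso_of_surj Initial (osum Middle Initial) HP HQP (fun p => inr p)); [intros x y h; exact h|].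
      intros [[q [h1 h2]]|p]; [|exists p; auto].
      exfalso. apply hQ, (wo_lt_le_trans HO h1 h2). }
  destruct (lower_part_gpred_bound hEh) as [t [hta hlow]].
  set (n := coef (lower_part gpred a) t + 1).
  set (gm := fun z : osum Middle Initial => match z with
     | inl q => exist (fun f => le f lead) (lower_part (proj1_sig q) a) (or_introl (lower_part_lt_lead _))
     | inr p => exist (fun f => le f lead) (shift t n (proj1_sig p))
                      (shift_le_monom C HC t n (proj1_sig p) a k hta hk1 (proj2_sig p))
     end : Initial).
  apply (@iso_of_mutual_embeddings Initial (osum Middle Initial) HP HQP (fun p => inr p) gm).
  - intros x y h. exact h.
  - intros [q1|p1] [q2|p2] h.
    + destruct q1 as [q1 [a1 b1]], q2 as [q2 [a2 b2]].
      change (lt q1 q2) in h. change (lt (lower_part q1 a) (lower_part q2 a)).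
      destruct (middle_shape q1 a1 b1) as [z1 e1]. destruct (middle_shape q2 a2 b2) as [z2 e2].
      apply lower_part_lt; auto. congruence.
    + change (lt (lower_part (proj1_sig q1) a) (shift t n (proj1_sig p2))).
      apply (wo_le_lt_trans HO (lower_part_middle_le q1)). apply lt_shift; auto.
    + destruct h.
    + change (lt (shift t n (proj1_sig p1)) (shift t n (proj1_sig p2))). apply (shift_smono C HC t n). exact h.
Qed.

Lemma Initial_max : max_or_empty Initial.
Proof.
  right. exists (exist (fun f => le f lead) lead (or_intror eq_refl)). intros [x hx]. simpl.
  apply (wo_le_not_lt HO hx).
Qed.

Lemma Middle_max : max_or_empty Middle.
Proof.
  destruct (classic (lt lead gpred)) as [e|e].
  - right. exists (exist (fun f => lt lead f /\ le f gpred) gpred (conj e (or_intror eq_refl))).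
    intros [x [h0 hx]]. simpl. apply (wo_le_not_lt HO hx).
  - left. intros [x [h1 h2]]. apply e. apply (wo_lt_le_trans HO h1 h2).
Qed.

Theorem segment_homeo_lowest_term :
  homeomorphic (segment (omega_pow C) g0) (segment (omega_pow C) (monom_plus a m k)).
Proof.
  assert (HT : is_ordinal (interval gpred g0)) by apply (sub_is_ordinal _ HO).
  apply (iso_homeo_trans _ _ _ segment_g0_split).
  apply (homeo_trans _ (osum (osum Middle Initial) (interval gpred g0))).
  { apply osum_homeo_l; auto using osum_max_or_empty, Initial_max, Middle_max.
    apply osum_swap; auto using Initial_max, Middle_max; apply (sub_is_ordinal _ HO). }
  apply (homeo_trans _ (osum Initial (interval gpred g0))).
  { apply osum_homeo_l; auto using osum_max_or_empty, Initial_max, Middle_max.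
    apply iso_homeomorphic, middle_absorbed. }
  apply iso_homeomorphic. apply (iso_trans (osum_iso _ _ _ _ (iso_refl Initial)
    (interval_plus_monom_iso C HC _ _ _ _ m gpred_plus_monom lead_plus_monom))).
  apply iso_sym, segment_lead_plus_split.
Qed.

End LowestTerm.

(** * Existence *)

Definition least_elt (X : LO) (x : X) : X := epsilon (inhabits x) (fun m => forall y, le m y).

Lemma least_elt_spec (X : LO) (HX : is_ordinal X) (x : X) : forall y, le (least_elt X x) y.
Proof.
  unfold least_elt. apply epsilon_spec.
  destruct (wo_least HX (fun _ => True) (ex_intro _ x I)) as [m [_ hm]].
  exists m. intro y. apply (wo_not_lt_le HX). apply hm; auto.
Qed.

Lemma mul_nat_one_iso (L : LO) (HL : is_ordinal L) : ord_iso (mul_nat L 1) L.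
Proof.
  apply (@iso_of_surj (mul_nat L 1) L (mul_nat_is_ordinal L 1 HL) HL (fun p => snd p)).
  - intros [[i pi] x] [[j pj] y]. simpl. intros [h|[_ h]]; auto. lia.
  - intro y. exists (exist (fun i => i < 1) 0 (Nat.lt_0_succ 0), y). reflexivity.
Qed.

Lemma segment_segment_iso (C : LO) (HC : is_ordinal C) (m a : C) (hma : lt m a) :
  ord_iso (segment C m) (segment (segment C a) (exist (fun y => lt y a) m hma)).
Proof.
  apply (@iso_of_surj _ _ (segment_is_ordinal m HC) (segment_is_ordinal _ (segment_is_ordinal a HC))
    (fun x => exist (fun y : segment C a => lt y (exist (fun y => lt y a) m hma))
                    (exist (fun y => lt y a) (proj1_sig x) (wo_trans HC (proj2_sig x) hma)) (proj2_sig x))).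
  - intros [x hx] [y hy] h. exact h.
  - intros [[y hy] hym]. exists (exist (fun y => lt y m) y hym). apply sig_eq. simpl. apply sig_eq. reflexivity.
Qed.

Section Classification.
Variable C : LO.
Hypothesis HC : is_ordinal C.
Let HO := omega_pow_is_ordinal C HC.
Variable c0 : C.
Hypothesis Hc0 : forall c, le c0 c.

Lemma monom_smono : smono (fun x : C => monom x 1).
Proof.
  intros x y h. apply (opow_lt_intro C _ _ y).
  - rewrite coef_monom_eq, coef_monom_ne; auto. apply (wo_gt_neq HC h).
  - intros z hz. rewrite !coef_monom_ne; auto; apply (wo_gt_neq HC); [|apply (wo_trans HC h)]; exact hz.
Qed.

Lemma segment_monom_bottom_iso (n : nat) : ord_iso (segment (omega_pow C) (monom c0 n)) (fin n).
Proof.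
  set (phi := fun x : segment (omega_pow C) (monom c0 n) =>
     exist (fun i => i < n) (coef (proj1_sig x) c0) (proj2 (lt_monom_inv C HC _ c0 n (proj2_sig x))) : fin n).
  apply (@iso_of_surj _ _ (segment_is_ordinal _ HO) (fin_is_ordinal n) phi).
  - intros [F1 h1] [F2 h2] h. change (lt F1 F2) in h. change (coef F1 c0 < coef F2 c0).
    destruct (opow_lt_elim _ _ _ h) as [w [k1 k2]].
    destruct (Hc0 w) as [e|e]; [|subst; auto].
    exfalso. destruct (lt_monom_inv C HC _ c0 n h2) as [z _]. rewrite z in k1; auto. lia.
  - intros [i hi].
    assert (hl : lt (monom c0 i) (monom c0 n)).
    { apply (opow_lt_intro C _ _ c0); [rewrite !coef_monom_eq; auto|].
      intros y hy. rewrite !coef_monom_ne; auto; apply (wo_gt_neq HC hy). }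
    exists (exist _ (monom c0 i) hl). apply sig_eq. simpl. apply coef_monom_eq.
Qed.

Lemma segment_finite (g0 : omega_pow C) : supported_upto c0 g0 ->
  exists c, valid c /\ homeomorphic (segment (omega_pow C) g0) (space c).
Proof.
  intro hlow. exists (Fam1 (coef g0 c0)). split; [exact I|]. apply iso_homeomorphic.
  replace g0 with (monom c0 (coef g0 c0)) at 1; [apply segment_monom_bottom_iso|].
  apply opow_ext. intro y. destruct (Hc0 y) as [q|q].
  - rewrite (hlow y q), coef_monom_ne by apply (wo_gt_neq HC q). reflexivity.
  - subst. rewrite coef_monom_eq. auto.
Qed.

Lemma segment_infinite (g0 : omega_pow C) (a : C) (k : nat) : lt c0 a -> 1 <= k ->
  supported_upto a g0 -> coef g0 a = k ->
  exists c, valid c /\ homeomorphic (segment (omega_pow C) g0) (space c).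
Proof.
  intros hca hk1 ha hk.
  assert (Va : is_ordinal (segment C a)) by (apply segment_is_ordinal; auto).
  assert (Na : nonzero (segment C a)) by (constructor; exact (exist _ c0 hca)).
  assert (hga : coef g0 a <> 0) by lia.
  destruct (lexp_nonzero C HC c0 g0 (ex_intro _ a hga)) as [hm1 hm2].
  set (m := lexp c0 g0) in *.
  assert (hma : le m a) by apply (lexp_le C HC c0 g0 a hga).
  destruct hma as [hma|hma].
  - assert (HH := segment_homeo_lowest_term C HC g0 a m k ha hk hk1 hm1 hm2 hma).
    destruct (Hc0 m) as [hcm|hcm].
    + exists (Fam4 k (segment C a) (segment C m)).
      split.
      * split; [lia|split; [exact Va|split; [exact Na|split; [apply segment_is_ordinal; auto|split]]]].
        -- constructor. exact (exist _ c0 hcm).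
        -- exists (exist _ m hma). apply (segment_segment_iso C HC).
      * apply (homeo_iso_trans _ _ _ HH). apply iso_sym. apply (monom_plus_segment_iso C HC a m k hma).
    + exists (Fam2 k (segment C a)). split; [split; [lia|split; auto]|].
      rewrite <- hcm in HH. apply (homeo_iso_trans _ _ _ HH).
      apply iso_sym. apply (monom_plus_one_segment_iso C HC a c0 k hca Hc0).
  - exists (Fam3 k (segment C a)). split; [split; [lia|split; auto]|]. apply iso_homeomorphic.
    replace g0 with (monom a k) at 1; [apply iso_sym, monom_segment_iso; auto|].
    apply opow_ext. intro y. destruct (wo_trichotomy HC y a) as [q|[q|q]].
    + rewrite coef_monom_ne by apply (wo_lt_neq HC q). symmetry. apply hm2. rewrite hma. auto.
    + subst. rewrite coef_monom_eq. auto.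
    + rewrite ha, coef_monom_ne; auto. apply (wo_gt_neq HC q).
Qed.

Lemma segment_classification (g0 : omega_pow C) :
  exists c, valid c /\ homeomorphic (segment (omega_pow C) g0) (space c).
Proof.
  destruct (classic (supported_upto c0 g0)) as [hlow|hlow]; [apply segment_finite; auto|].
  destruct (opow_greatest_exponent C HC g0) as [a [ha1 ha2]].
  { apply not_all_ex_not in hlow. destruct hlow as [z hz]. exists z. tauto. }
  apply (segment_infinite g0 a (coef g0 a)); auto; [|lia].
  destruct (Hc0 a) as [h|h]; auto. subst. contradiction.
Qed.

End Classification.

Theorem existence (G : LO) (HG : is_ordinal G) : exists c, valid c /\ homeomorphic G (space c).
Proof.
  destruct (classic (inhabited G)) as [[x0]|hG].
  2:{ exists (Fam1 0). split; [exact I|]. apply iso_homeomorphic.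
      apply (@iso_of_surj G (fin 0) HG (fin_is_ordinal 0) (fun x => False_rect _ (hG (inhabits x)))).
      - intros x. exfalso. apply hG. constructor. exact x.
      - intros [i hi]. lia. }
  pose proof (least_elt_spec G HG x0) as Hc0.
  destruct (embedding_dichotomy HG (omega_pow_is_ordinal G HG) (monom_smono G HG)) as [Hiso|[g0 Hiso]].
  - exists (Fam3 1 G). split; [split; [lia|split; [exact HG|constructor; exact x0]]|].
    apply iso_homeomorphic. apply (iso_trans Hiso). apply iso_sym, mul_nat_one_iso, omega_pow_is_ordinal, HG.
  - destruct (segment_classification G HG _ Hc0 g0) as [c [vc Hc]].
    exists c. split; auto. apply (iso_homeo_trans _ _ _ Hiso Hc).
Qed.

(** * Uniqueness *)

Definition has_card (X : LO) (P : X -> Prop) (n : nat) :=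
  exists l : list X, NoDup l /\ length l = n /\ forall x, P x <-> In x l.

Lemma has_card_unique (X : LO) P n n' : has_card X P n -> has_card X P n' -> n = n'.
Proof.
  intros [l [h1 [h2 h3]]] [l' [h1' [h2' h3']]].
  assert (length l <= length l') by (apply NoDup_incl_length; auto; intros x hx; apply h3', h3, hx).
  assert (length l' <= length l) by (apply NoDup_incl_length; auto; intros x hx; apply h3, h3', hx).
  lia.
Qed.

Lemma has_card_bij (X Y : LO) (f : X -> Y) (g : Y -> X) :
  (forall x, g (f x) = x) -> (forall y, f (g y) = y) ->
  forall P n, has_card X P n -> has_card Y (fun y => P (g y)) n.
Proof.
  intros gf fg P n [l [h1 [h2 h3]]]. exists (map f l). split; [|split].
  - apply FinFun.Injective_map_NoDup; auto. intros x y e. rewrite <- (gf x), e, gf. auto.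
  - rewrite length_map; auto.
  - intro y. rewrite h3. split.
    + intro h. rewrite <- (fg y). apply in_map. auto.
    + intro h. apply in_map_iff in h. destruct h as [x [e hx]]. subst. rewrite gf. auto.
Qed.

Lemma has_card_ext (X : LO) (P P' : X -> Prop) n : (forall x, P x <-> P' x) -> has_card X P n -> has_card X P' n.
Proof. intros e [l [h1 [h2 h3]]]. exists l. split; auto. split; auto. intro x. rewrite <- e. auto. Qed.

Lemma fin_has_card n : has_card (fin n) (fun _ => True) n.
Proof.
  assert (H : forall j, j <= n -> has_card (fin n) (fun x => proj1_sig x < j) j).
  { induction j as [|j IH]; intro hj.
    - exists nil. split; [constructor|split; auto]. intros x; simpl; lia.
    - destruct (IH ltac:(lia)) as [l [h1 [h2 h3]]].
      assert (hjn : j < n) by lia.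
      exists (exist (fun i => i < n) j hjn :: l). split; [|split].
      + constructor; auto. intro hin. apply h3 in hin. simpl in hin. lia.
      + simpl; auto.
      + intros x. simpl. rewrite <- h3. split.
        * intro e. destruct (Nat.eq_dec (proj1_sig x) j) as [ej|ej]; [left; apply sig_eq; auto|right; lia].
        * intros [e|e]; [subst; simpl; lia|lia]. }
  apply (has_card_ext _ _ _ n (fun x : fin n => conj (fun _ => I) (fun _ => proj2_sig x)) (H n (le_n n))).
Qed.

Definition finite_type (X : LO) := exists l : list X, forall x, In x l.

Lemma not_finite_of_injection (X : LO) (phi : nat -> X) : (forall i j, phi i = phi j -> i = j) -> ~ finite_type X.
Proof.
  intros hinj [l hl].
  assert (H : length (map phi (seq 0 (S (length l)))) <= length l).
  { apply NoDup_incl_length.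
    - apply FinFun.Injective_map_NoDup; [intros i j; apply hinj|apply seq_NoDup].
    - intros x _. apply hl. }
  rewrite length_map, length_seq in H. lia.
Qed.

Lemma finite_type_homeo (X Y : LO) : homeomorphic X Y -> finite_type X -> finite_type Y.
Proof.
  intros [f [g [gf [fg _]]]] [l hl]. exists (map f l). intro y. rewrite <- (fg y). apply in_map. auto.
Qed.

Lemma fin_finite n : finite_type (fin n).
Proof. destruct (fin_has_card n) as [l [_ [_ h]]]. exists l. intro x. apply h. exact I. Qed.

Lemma lt_top (A : LO) (c : succ A) : c <> None -> lt c (None : succ A).
Proof. destruct c; simpl; tauto. Qed.

Lemma nlt_top (A : LO) (c : succ A) : ~ lt (None : succ A) c.
Proof. destruct c; simpl; tauto. Qed.

Lemma le_top_eq (A : LO) (c : succ A) : le (None : succ A) c -> c = None.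
Proof. intros [h|h]; auto. destruct (nlt_top A c h). Qed.

Definition bot (A : LO) : succ A := least_elt (succ A) None.

Lemma bot_least (A : LO) (HA : is_ordinal A) (c : succ A) : le (bot A) c.
Proof. apply least_elt_spec, succ_is_ordinal, HA. Qed.

Lemma bot_not_top (A : LO) (HA : is_ordinal A) : nonzero A -> bot A <> None.
Proof.
  intros [a] e. destruct (bot_least A HA (Some a)) as [h|h]; rewrite e in h; [exact h|discriminate].
Qed.

(* The spaces of families (2)-(4) with parameter A, as initial segments of
   omega^(A + 1) below g; the exponent None stands for A.  The least exponent
   [mrank] of a point is its Cantor-Bendixson rank. *)
Record model := Model {
  mA : LO;
  mA_ordinal : is_ordinal mA;
  mA_nonzero : nonzero mA;
  mg : omega_pow (succ mA);
  mg_top : 1 <= coef mg None }.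

Definition mspace (M : model) : LO := segment (omega_pow (succ (mA M))) (mg M).
Definition mrank (M : model) (x : mspace M) : succ (mA M) := lexp (bot (mA M)) (proj1_sig x).
Definition upper_bounded (M : model) (c : succ (mA M)) := bounded (mspace M) (fun y => le c (mrank M y)).
Definition has_top (M : model) := exists x : mspace M, mrank M x = None.
Definition top_card (M : model) (n : nat) := has_card (mspace M) (fun x => mrank M x = None) n.

Section ModelFacts.
Variable M : model.
Local Notation A := (mA M).
Local Notation C := (succ (mA M)).
Local Notation g := (mg M).
Local Notation top := (None : succ (mA M)).
Let HA := mA_ordinal M.
Let HC : is_ordinal C := succ_is_ordinal A HA.
Let HO := omega_pow_is_ordinal C HC.

Lemma mrank_rank_function : rank_function (mspace M) C (mrank M).
Proof. apply (lexp_rank_function C HC (bot A) (bot_least A HA)). Qed.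

Lemma lexp_top_inv (x : omega_pow C) : lexp (bot A) x = top -> x = monom top (coef x top) /\ coef x top <> 0.
Proof.
  intro h. destruct (classic (exists d, coef x d <> 0)) as [hn|hn].
  - destruct (lexp_nonzero C HC (bot A) x hn) as [k1 k2]. rewrite h in k1, k2. split; auto.
    apply opow_ext. intros [a|]; [|rewrite coef_monom_eq; auto].
    rewrite coef_monom_ne by discriminate. apply k2. exact I.
  - exfalso. rewrite lexp_ozero in h; [apply (bot_not_top A HA (mA_nonzero M) h)|exact HC|].
    intro d. apply NNPP. intro e. apply hn; eauto.
Qed.

Lemma lexp_monom (c : C) j : 1 <= j -> lexp (bot A) (monom c j) = c.
Proof.
  intro hj. apply (lexp_eq C HC); [rewrite coef_monom_eq; lia|].
  intros d hd. apply coef_monom_ne, (wo_lt_neq HC hd).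
Qed.

Lemma lt_g_of_no_top (x : omega_pow C) : coef x top = 0 -> lt x g.
Proof.
  intro h. pose proof (mg_top M). apply (opow_lt_intro C _ _ top); [lia|].
  intros y hy. destruct (nlt_top A y hy).
Qed.

Lemma mrank_attains_some a : exists x : mspace M, mrank M x = Some a.
Proof.
  assert (hx : lt (monom (Some a : C) 1) g) by (apply lt_g_of_no_top; apply coef_monom_ne; discriminate).
  exists (exist (fun x => lt x g) _ hx). apply lexp_monom. auto.
Qed.

Lemma mspace_infinite : ~ finite_type (mspace M).
Proof.
  assert (hx : forall i, lt (monom (bot A) i) g).
  { intro i. apply lt_g_of_no_top, coef_monom_ne. intro e. apply (bot_not_top A HA (mA_nonzero M)). auto. }
  apply (not_finite_of_injection (mspace M) (fun i => exist (fun x => lt x g) _ (hx i))).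
  intros i j e. apply (f_equal (fun x : mspace M => coef (proj1_sig x) (bot A))) in e.
  change (coef (monom (bot A) i) (bot A) = coef (monom (bot A) j) (bot A)) in e.
  rewrite !coef_monom_eq in e. auto.
Qed.

Lemma mspace_ozero : lt ozero g.
Proof. apply lt_g_of_no_top, coef_ozero. Qed.

Lemma upper_unbounded (b : C) : (forall w, coef g w <> 0 -> lt b w) -> ~ upper_bounded M b.
Proof.
  intros hb [[u hu] hbd].
  assert (hv : lt (bump u b) g).
  { destruct (opow_lt_elim_nz C _ _ hu) as [w [k0 [k1 k2]]].
    apply (opow_lt_intro C _ _ w); [rewrite coef_bump_gt; auto|].
    intros y hy. rewrite coef_bump_gt; auto. apply (wo_trans HC (hb w k0) hy). }
  specialize (hbd (exist (fun x => lt x g) _ hv)).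
  assert (hl : le (bump u b) u).
  { destruct hbd as [e|e]; [unfold mrank; simpl; rewrite (lexp_bump C HC); right; auto|left; exact e|].
    right. apply (f_equal (@proj1_sig _ _)) in e. exact e. }
  apply (wo_le_not_lt HO hl). apply (lt_bump C HC).
Qed.

Lemma top_card_of (n : nat) : (forall j, 1 <= j -> (lt (monom top j) g <-> j <= n)) -> top_card M n.
Proof.
  intro hn.
  assert (H : forall n', n' <= n -> has_card (mspace M)
             (fun x => exists j, 1 <= j <= n' /\ proj1_sig x = monom top j) n').
  { induction n' as [|n' IH]; intro hle.
    - exists nil. split; [constructor|split; auto]. intro x. split; [intros [j [hj _]]; lia|intros []].
    - destruct (IH ltac:(lia)) as [l [h1 [h2 h3]]].
      assert (hx : lt (monom top (S n')) g) by (apply hn; lia).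
      exists (exist (fun x => lt x g) _ hx :: l). split; [|split].
      + constructor; auto. intro hin. apply h3 in hin. destruct hin as [j [hj e]]. simpl in e.
        apply (f_equal (fun f => coef f top)) in e. rewrite !coef_monom_eq in e. lia.
      + simpl. auto.
      + intro x. simpl. rewrite <- h3. split.
        * intros [j [hj e]]. destruct (Nat.eq_dec j (S n')) as [ej|ej].
          -- left. apply sig_eq. simpl. subst. auto.
          -- right. exists j. split; [lia|auto].
        * intros [e|[j [hj e]]]; [exists (S n'); split; [lia|subst; reflexivity]|exists j; split; [lia|auto]]. }
  apply (has_card_ext _ (fun x : mspace M => exists j, 1 <= j <= n /\ proj1_sig x = monom top j) _ n);
    [|apply (H n (le_n n))]. intro x. split.
  - intros [j [hj e]]. unfold mrank. rewrite e. apply lexp_monom. lia.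
  - intro e. destruct (lexp_top_inv _ e) as [k2 k1].
    exists (coef (proj1_sig x) top). split; [split; [lia|]|auto].
    apply hn; [lia|]. rewrite <- k2. exact (proj2_sig x).
Qed.

End ModelFacts.

Definition threshold (M : model) (b : mA M) :=
  upper_bounded M (Some b) /\ forall c, lt c (Some b : succ (mA M)) -> ~ upper_bounded M c.

Definition compact_space (X : LO) := bounded X (fun _ => True).

Section Transfer.
Variables M1 M2 : model.
Local Notation A1 := (mA M1).
Local Notation A2 := (mA M2).
Local Notation S1 := (mspace M1).
Local Notation S2 := (mspace M2).
Local Notation r1 := (mrank M1).
Local Notation r2 := (mrank M2).
Let HA1 := mA_ordinal M1.
Let HA2 := mA_ordinal M2.
Let HC1 := succ_is_ordinal A1 HA1.
Let HC2 := succ_is_ordinal A2 HA2.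
Let HS1 : is_ordinal S1 := segment_is_ordinal _ (omega_pow_is_ordinal _ HC1).
Let HS2 : is_ordinal S2 := segment_is_ordinal _ (omega_pow_is_ordinal _ HC2).

Section RankCorrespondence.
Variables (h : S1 -> S2) (hi : S2 -> S1).
Hypothesis e1 : forall x, hi (h x) = x.
Hypothesis e2 : forall y, h (hi y) = y.
Hypothesis ch : ord_continuous S1 S2 h.
Hypothesis chi : ord_continuous S2 S1 hi.

Lemma rank_lt_transfer x z : lt (r1 z) (r1 x) <-> lt (r2 (h z)) (r2 (h x)).
Proof.
  apply (rank_transfer S1 S2 _ _ HC1 HC2 r1 r2 (mrank_rank_function M1) (mrank_rank_function M2) h hi e1 e2 ch chi).
Qed.

Lemma rank_eq_transfer x z : r1 z = r1 x <-> r2 (h z) = r2 (h x).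
Proof.
  split; intro e.
  - destruct (wo_trichotomy HC2 (r2 (h z)) (r2 (h x))) as [q|[q|q]]; auto; exfalso;
      apply rank_lt_transfer in q; rewrite e in q; apply (wo_irrefl HC1 _ q).
  - destruct (wo_trichotomy HC1 (r1 z) (r1 x)) as [q|[q|q]]; auto; exfalso;
      apply rank_lt_transfer in q; rewrite e in q; apply (wo_irrefl HC2 _ q).
Qed.

Lemma rank_le_transfer x z : le (r1 z) (r1 x) <-> le (r2 (h z)) (r2 (h x)).
Proof. split; (intros [q|q]; [left; apply rank_lt_transfer; auto|right; apply rank_eq_transfer; auto]). Qed.

Lemma bounded_transfer (T : S1 -> Prop) : bounded S1 T -> bounded S2 (fun y => T (hi y)).
Proof.
  intro hb. apply (rel_compact_iff_bounded S2 HS2 (exist _ ozero (mspace_ozero M2))).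
  apply (rel_compact_homeo S1 S2 h hi e1 e2 ch).
  apply (rel_compact_iff_bounded S1 HS1 (exist _ ozero (mspace_ozero M1))). auto.
Qed.

Lemma bounded_transfer_inv (T : S2 -> Prop) : bounded S2 T -> bounded S1 (fun x => T (h x)).
Proof.
  intro hb. apply (rel_compact_iff_bounded S1 HS1 (exist _ ozero (mspace_ozero M1))).
  apply (rel_compact_homeo S2 S1 hi h e2 e1 chi).
  apply (rel_compact_iff_bounded S2 HS2 (exist _ ozero (mspace_ozero M2))). auto.
Qed.

Lemma upper_bounded_transfer x : upper_bounded M1 (r1 x) <-> upper_bounded M2 (r2 (h x)).
Proof.
  split; intro hb.
  - apply bounded_transfer in hb. revert hb. apply bounded_mono. intros y hy. apply rank_le_transfer. rewrite e2. auto.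
  - apply bounded_transfer_inv in hb. revert hb. apply bounded_mono. intros y hy. apply rank_le_transfer in hy. auto.
Qed.

Lemma top_transfer : has_top M1 -> has_top M2 -> forall x, r1 x = None <-> r2 (h x) = None.
Proof.
  intros [x1 hx1] [y2 hy2] x. split; intro hx; apply NNPP; intro hn.
  - assert (q : lt (r2 (h x)) (r2 (h (hi y2)))) by (rewrite e2, hy2; apply lt_top; auto).
    apply rank_lt_transfer in q. rewrite hx in q. apply (nlt_top _ _ q).
  - assert (q : lt (r1 x) (r1 x1)) by (rewrite hx1; apply lt_top; auto).
    apply rank_lt_transfer in q. rewrite hx in q. apply (nlt_top _ _ q).
Qed.

Definition rank_corr (a1 : A1) (a2 : A2) := exists x, r1 x = Some a1 /\ r2 (h x) = Some a2.

Lemma rank_corr_lt a1 a2 b1 b2 : rank_corr a1 a2 -> rank_corr b1 b2 -> (lt a1 b1 <-> lt a2 b2).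
Proof.
  intros [x [k1 k2]] [y [l1 l2]].
  change (lt (Some a1 : succ A1) (Some b1) <-> lt (Some a2 : succ A2) (Some b2)).
  rewrite <- k1, <- k2, <- l1, <- l2. apply rank_lt_transfer.
Qed.

Section SameTop.
Hypothesis hT : forall x, r1 x = None <-> r2 (h x) = None.

Lemma rank_corr_total a1 : exists a2, rank_corr a1 a2.
Proof.
  destruct (mrank_attains_some M1 a1) as [x hx].
  destruct (r2 (h x)) as [a2|] eqn:E; [exists a2, x; auto|]. apply hT in E. congruence.
Qed.

Lemma rank_corr_surj a2 : exists a1, rank_corr a1 a2.
Proof.
  destruct (mrank_attains_some M2 a2) as [y hy].
  destruct (r1 (hi y)) as [a1|] eqn:E; [exists a1, (hi y); rewrite e2; auto|].
  apply hT in E. rewrite e2 in E. congruence.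
Qed.

Lemma base_iso : ord_iso A1 A2.
Proof. apply (iso_of_rel HA1 HA2 rank_corr); auto using rank_corr_total, rank_corr_surj, rank_corr_lt. Qed.

Lemma segment_corr_iso b1 b2 : rank_corr b1 b2 -> ord_iso (segment A1 b1) (segment A2 b2).
Proof.
  intro hb.
  apply (iso_of_rel (segment_is_ordinal _ HA1) (segment_is_ordinal _ HA2)
           (fun x y => rank_corr (proj1_sig x) (proj1_sig y))).
  - intros [x hx]. destruct (rank_corr_total x) as [y hy].
    exists (exist _ y (proj1 (rank_corr_lt x y b1 b2 hy hb) hx)). auto.
  - intros [y hy]. destruct (rank_corr_surj y) as [x hx].
    exists (exist _ x (proj2 (rank_corr_lt x y b1 b2 hx hb) hy)). auto.
  - intros [x hx] [y hy] [x' hx'] [y' hy']. simpl. apply rank_corr_lt.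
Qed.

Lemma top_card_transfer n : top_card M1 n -> top_card M2 n.
Proof.
  intro hc. apply (has_card_bij S1 S2 h hi e1 e2) in hc. revert hc. apply has_card_ext.
  intro y. rewrite hT, e2. tauto.
Qed.

Lemma some_upper_bounded_transfer a1 : upper_bounded M1 (Some a1) -> exists a2, upper_bounded M2 (Some a2).
Proof.
  intro hb. destruct (rank_corr_total a1) as [a2 [x [k1 k2]]]. exists a2.
  rewrite <- k2. apply upper_bounded_transfer. rewrite k1. auto.
Qed.

Lemma threshold_corr b1 b2 : threshold M1 b1 -> threshold M2 b2 -> rank_corr b1 b2.
Proof.
  intros [B1 U1] [B2 U2].
  destruct (rank_corr_total b1) as [c2 [x1 [hx1 E2]]].
  destruct (rank_corr_surj b2) as [c1 [y1 [hy1 E1]]].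
  assert (n2 : ~ lt c2 b2).
  { intro q. apply (U2 (Some c2) q). rewrite <- E2. apply upper_bounded_transfer. rewrite hx1. auto. }
  assert (n1 : ~ lt c1 b1).
  { intro q. apply (U1 (Some c1) q). rewrite <- hy1. apply upper_bounded_transfer. rewrite E1. auto. }
  assert (e : c2 = b2); [|subst; exists x1; auto].
  destruct (wo_trichotomy HA2 c2 b2) as [q|[q|q]]; [tauto|auto|].
  exfalso. apply n1. apply (rank_corr_lt c1 b2 b1 c2); auto; [exists y1|exists x1]; auto.
Qed.

End SameTop.
End RankCorrespondence.

Hypothesis Hhom : homeomorphic S1 S2.

Lemma compact_transfer : compact_space S1 -> compact_space S2.
Proof.
  destruct Hhom as [h [hi [e1 [e2 [ch chi]]]]]. intro hb.
  apply (bounded_transfer h hi e1 e2 ch) in hb. revert hb. apply bounded_mono. auto.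
Qed.

Lemma upper_bounded_exists_transfer : (exists x, upper_bounded M1 (r1 x)) -> exists y, upper_bounded M2 (r2 y).
Proof.
  destruct Hhom as [h [hi [e1 [e2 [ch chi]]]]]. intros [x hx].
  exists (h x). apply (upper_bounded_transfer h hi e1 e2 ch chi). auto.
Qed.

Lemma same_top_transfer : (has_top M1 <-> has_top M2) ->
  exists h : S1 -> S2, exists hi : S2 -> S1, (forall x, hi (h x) = x) /\ (forall y, h (hi y) = y) /\
    ord_continuous S1 S2 h /\ ord_continuous S2 S1 hi /\ forall x, r1 x = None <-> r2 (h x) = None.
Proof.
  intro htop. destruct Hhom as [h [hi [e1 [e2 [ch chi]]]]]. exists h, hi. do 4 (split; auto).
  destruct (classic (has_top M1)) as [t1|t1]; [apply (top_transfer h hi e1 e2 ch chi); tauto|].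
  intro x. split; intro e; exfalso; [apply t1; exists x|apply t1, htop; exists (h x)]; auto.
Qed.

Lemma base_iso_transfer : (has_top M1 <-> has_top M2) -> ord_iso A1 A2.
Proof.
  intro htop. destruct (same_top_transfer htop) as [h [hi [e1 [e2 [ch [chi hT]]]]]].
  exact (base_iso h hi e1 e2 ch chi hT).
Qed.

Lemma top_card_eq : has_top M1 -> has_top M2 -> forall n1 n2, top_card M1 n1 -> top_card M2 n2 -> n1 = n2.
Proof.
  intros t1 t2 n1 n2 c1 c2. destruct (same_top_transfer (conj (fun _ => t2) (fun _ => t1))) as [h [hi [e1 [e2 [ch [chi hT]]]]]].
  apply (has_card_unique S2 (fun y => r2 y = None) n1 n2); auto. exact (top_card_transfer h hi e1 e2 hT n1 c1).
Qed.

Lemma some_upper_bounded_exists_transfer : (has_top M1 <-> has_top M2) ->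
  forall a1, upper_bounded M1 (Some a1) -> exists a2, upper_bounded M2 (Some a2).
Proof.
  intro htop. destruct (same_top_transfer htop) as [h [hi [e1 [e2 [ch [chi hT]]]]]].
  exact (some_upper_bounded_transfer h hi e1 e2 ch chi hT).
Qed.

Lemma threshold_segment_iso : (has_top M1 <-> has_top M2) ->
  forall b1 b2, threshold M1 b1 -> threshold M2 b2 -> ord_iso (segment A1 b1) (segment A2 b2).
Proof.
  intros htop b1 b2 t1 t2. destruct (same_top_transfer htop) as [h [hi [e1 [e2 [ch [chi hT]]]]]].
  apply (segment_corr_iso h hi e1 e2 ch chi hT). exact (threshold_corr h hi e1 e2 ch chi hT b1 b2 t1 t2).
Qed.

End Transfer.

Lemma has_top_of (M : model) : lt (monom (None : succ (mA M)) 1) (mg M) -> has_top M.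
Proof. intro h. exists (exist (fun x => lt x (mg M)) _ h). apply lexp_monom. auto. Qed.

Lemma upper_bounded_mono (M : model) (c c' : succ (mA M)) : le c c' -> upper_bounded M c -> upper_bounded M c'.
Proof.
  intro hc. apply bounded_mono. intros y hy. apply (wo_le_trans (succ_is_ordinal _ (mA_ordinal M)) hc hy).
Qed.

Lemma mspace_le_of (M : model) (u : omega_pow (succ (mA M))) (hu : lt u (mg M)) (y : mspace M) :
  le (proj1_sig y) u -> le y (exist _ u hu).
Proof. intros [h|h]; [left; exact h|right; apply sig_eq; exact h]. Qed.

Section Families.
Variable A : LO.
Hypothesis HA : is_ordinal A.
Hypothesis nA : nonzero A.
Local Notation C := (succ A).
Local Notation top := (None : succ A).
Let HC : is_ordinal C := succ_is_ordinal A HA.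
Let HO := omega_pow_is_ordinal C HC.

Lemma bot_lt_top : lt (bot A) top.
Proof. apply lt_top, bot_not_top; auto. Qed.

Lemma monom_top_coef k : 1 <= k -> 1 <= coef (monom top k) top.
Proof. rewrite coef_monom_eq. auto. Qed.

Lemma monom_plus_top_coef (c : C) k : c <> top -> 1 <= k -> 1 <= coef (monom_plus top c k) top.
Proof. intros hc hk. rewrite coef_monom_plus_high; auto. apply lt_top, hc. Qed.

Definition model2 k (hk : 1 <= k) : model :=
  Model A HA nA (monom_plus top (bot A) k) (monom_plus_top_coef (bot A) k (bot_not_top A HA nA) hk).
Definition model3 k (hk : 1 <= k) : model := Model A HA nA (monom top k) (monom_top_coef k hk).
Definition model4 k (b : A) (hk : 1 <= k) : model :=
  Model A HA nA (monom_plus top (Some b) k) (monom_plus_top_coef (Some b) k ltac:(discriminate) hk).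

Lemma segment_top_iso : ord_iso A (segment C top).
Proof.
  apply (@iso_of_surj A (segment C top) HA (segment_is_ordinal _ HC) (fun a => exist (fun c : C => lt c top) (Some a) I)).
  - intros x y h. exact h.
  - intros [[a|] p]; [exists a; apply sig_eq; reflexivity|destruct p].
Qed.

Lemma segment_some_iso (b : A) : ord_iso (segment A b) (segment C (Some b)).
Proof.
  apply (@iso_of_surj (segment A b) (segment C (Some b)) (segment_is_ordinal _ HA) (segment_is_ordinal _ HC)
          (fun x => exist (fun c : C => lt c (Some b)) (Some (proj1_sig x)) (proj2_sig x))).
  - intros x y h. exact h.
  - intros [[a|] p]; [exists (exist _ a p); apply sig_eq; reflexivity|destruct p].
Qed.

Lemma omega_pow_top_iso : ord_iso (omega_pow A) (omega_pow (segment C top)).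
Proof. apply omega_pow_iso; auto using segment_is_ordinal, segment_top_iso. Qed.

Lemma space2_iso k hk : ord_iso (space (Fam2 k A)) (mspace (model2 k hk)).
Proof.
  apply (iso_trans (succ_iso _ _ (mul_nat_iso _ _ k omega_pow_top_iso))).
  apply (monom_plus_one_segment_iso C HC top (bot A) k bot_lt_top (bot_least A HA)).
Qed.

Lemma space3_iso k hk : ord_iso (space (Fam3 k A)) (mspace (model3 k hk)).
Proof. apply (iso_trans (mul_nat_iso _ _ k omega_pow_top_iso)). apply (monom_segment_iso C HC top k). Qed.

Lemma space4_iso k (B : LO) (HB : is_ordinal B) b hk : ord_iso B (segment A b) ->
  ord_iso (space (Fam4 k A B)) (mspace (model4 k b hk)).
Proof.
  intro hB. apply (iso_trans (osum_iso _ _ _ _ (mul_nat_iso _ _ k omega_pow_top_iso)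
    (omega_pow_iso _ _ HB (segment_is_ordinal _ HC) (iso_trans hB (segment_some_iso b))))).
  apply (monom_plus_segment_iso C HC top (Some b) k I).
Qed.

Lemma lt_monom_top_iff j k : 1 <= j -> (lt (monom top j) (monom top k) <-> j <= k - 1).
Proof.
  intro hj. split.
  - intro h. apply lt_monom_inv in h; [|exact HC]. destruct h as [_ h]. rewrite coef_monom_eq in h. lia.
  - intro h. apply (opow_lt_intro C _ _ top); [rewrite !coef_monom_eq; lia|].
    intros y hy. destruct (nlt_top A y hy).
Qed.

Lemma lt_monom_top_plus_iff (c : C) k j : c <> top -> 1 <= j -> (lt (monom top j) (monom_plus top c k) <-> j <= k).
Proof.
  intros hc hj. assert (hct : lt c top) by (apply lt_top, hc). split.
  - intro h. apply NNPP. intro hn. apply (wo_asym HO h).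
    apply (opow_lt_intro C _ _ top); [rewrite coef_monom_plus_high, coef_monom_eq; auto; lia|].
    intros y hy. destruct (nlt_top A y hy).
  - intro h. destruct (Nat.eq_dec j k) as [e|e]; [subst j; apply (monom_lt_monom_plus C HC top c k hct)|].
    apply (opow_lt_intro C _ _ top); [rewrite coef_monom_plus_high, coef_monom_eq; auto; lia|].
    intros y hy. destruct (nlt_top A y hy).
Qed.

Lemma lt_monom_top_plus_le (c : C) k (y : omega_pow C) : c <> top ->
  lt y (monom_plus top c k) -> (forall d, lt d c -> coef y d = 0) -> le y (monom top k).
Proof.
  intros hc hy hd. destruct (opow_lt_elim_nz C _ _ hy) as [w [k0 [k1 k2]]].
  unfold monom_plus in k0, k1, k2. rewrite coef_set in k0, k1.
  destruct (dec_spec (w = c)) as [[e1 e2]|[e1 e2]]; rewrite e2 in k0, k1.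
  - subst w. right. apply opow_ext. intro z. destruct (wo_trichotomy HC z c) as [q|[q|q]].
    + rewrite hd, coef_monom_ne; auto. intro e; subst. exact (nlt_top A c q).
    + subst. rewrite coef_monom_ne; auto. lia.
    + rewrite k2, coef_set_ne; auto. apply (wo_gt_neq HC q).
  - assert (w = top) by (apply NNPP; intro e; rewrite coef_monom_ne in k0; auto).
    subst w. left. apply (opow_lt_intro C _ _ top); [rewrite coef_monom_eq in k1 |- *; auto|].
    intros z hz. destruct (nlt_top A z hz).
Qed.

Lemma model2_compact k hk : compact_space (mspace (model2 k hk)).
Proof.
  assert (hu : lt (monom top k) (monom_plus top (bot A) k)) by apply (monom_lt_monom_plus C HC _ _ _ bot_lt_top).
  exists (exist (fun x => lt x _) _ hu). intros [y hy] _. apply mspace_le_of. cbn [proj1_sig].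
  apply (lt_monom_top_plus_le (bot A)); auto using bot_not_top.
  intros d hd. destruct (wo_le_not_lt HC (bot_least A HA d) hd).
Qed.

Lemma model2_top_card k hk : top_card (model2 k hk) k.
Proof. apply top_card_of. intros j hj. apply lt_monom_top_plus_iff; auto using bot_not_top. Qed.

Lemma model2_has_top k hk : has_top (model2 k hk).
Proof. apply has_top_of, lt_monom_top_plus_iff; auto using bot_not_top. Qed.

Lemma model3_some_unbounded k hk a : ~ upper_bounded (model3 k hk) (Some a).
Proof.
  apply upper_unbounded. intros w hw. change (coef (monom top k) w <> 0) in hw. destruct w as [w|]; [|exact I].
  rewrite coef_monom_ne in hw; [tauto|discriminate].
Qed.

Lemma model3_not_compact k hk : ~ compact_space (mspace (model3 k hk)).
Proof.
  destruct nA as [a]. intro h. apply (model3_some_unbounded k hk a). revert h. apply bounded_mono. auto.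
Qed.

Lemma model3_one_no_top hk : ~ has_top (model3 1 hk).
Proof.
  intros [[x hx] e]. destruct (lexp_top_inv (model3 1 hk) x e) as [_ k1].
  destruct (lt_monom_inv C HC x top 1 hx) as [_ h]. apply Nat.lt_1_r in h. exact (k1 h).
Qed.

Lemma model3_top_bounded k hk : upper_bounded (model3 k hk) top.
Proof.
  assert (hu : lt (monom top (k - 1)) (monom top k)) by (apply (monom_lt_monom C HC); lia).
  exists (exist (fun x => lt x _) _ hu). intros [y hy] h. apply mspace_le_of. cbn [proj1_sig].
  apply le_top_eq in h. destruct (lexp_top_inv (model3 k hk) y h) as [k2 _].
  change (y = monom top (@coef C y top)) in k2.
  destruct (lt_monom_inv C HC y top k hy) as [_ hyk].
  rewrite k2. destruct (Nat.eq_dec (@coef C y top) (k - 1)) as [e|e]; [right; rewrite e; auto|left].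
  apply (monom_lt_monom C HC). lia.
Qed.

Lemma model3_has_top k hk : 2 <= k -> has_top (model3 k hk).
Proof. intro h2. apply has_top_of, lt_monom_top_iff; lia. Qed.

Lemma model3_top_card k hk : top_card (model3 k hk) (k - 1).
Proof. apply top_card_of. intros j hj. apply lt_monom_top_iff; auto. Qed.

Lemma model4_threshold k b hk : threshold (model4 k b hk) b.
Proof.
  split.
  - assert (hu : lt (monom top k) (monom_plus top (Some b) k)) by apply (monom_lt_monom_plus C HC top (Some b) k I).
    exists (exist (fun x => lt x _) _ hu). intros [y hy] h. apply mspace_le_of. cbn [proj1_sig].
    apply (lt_monom_top_plus_le (Some b)); [discriminate|exact hy|].
    intros d hd. destruct (classic (exists d', coef y d' <> 0)) as [hn|hn].
    + apply (lexp_nonzero C HC (bot A) y hn). apply (wo_lt_le_trans HC hd h).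
    + apply NNPP. intro e. apply hn. eauto.
  - intros c hc. apply upper_unbounded. intros w hw. change (coef (monom_plus top (Some b) k) w <> 0) in hw.
    destruct (classic (w = Some b)) as [e|e]; [subst; exact hc|].
    destruct (classic (w = top)) as [e'|e']; [subst; apply (wo_lt_le_trans HC hc); left; exact I|].
    rewrite coef_monom_plus_other in hw; tauto.
Qed.

Lemma model4_top_bounded k b hk : upper_bounded (model4 k b hk) top.
Proof. apply (upper_bounded_mono (model4 k b hk) (Some b)); [left; exact I|apply model4_threshold]. Qed.

Lemma model4_not_compact k b hk : (exists a, lt a b) -> ~ compact_space (mspace (model4 k b hk)).
Proof.
  intros [a ha] h. apply (proj2 (model4_threshold k b hk) (Some a) ha). revert h. apply bounded_mono. auto.
Qed.

Lemma model4_has_top k b hk : has_top (model4 k b hk).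
Proof. apply has_top_of, lt_monom_top_plus_iff; [discriminate|auto|auto]. Qed.

Lemma model4_top_card k b hk : top_card (model4 k b hk) k.
Proof. apply top_card_of. intros j hj. apply lt_monom_top_plus_iff; [discriminate|auto]. Qed.

End Families.

Lemma homeo_of_isos (X Y X' Y' : LO) : ord_iso X X' -> ord_iso Y Y' -> homeomorphic X Y -> homeomorphic X' Y'.
Proof.
  intros i1 i2 H. apply (homeo_trans _ X); [apply homeo_sym, iso_homeomorphic, i1|].
  apply (homeo_trans _ Y); auto. apply iso_homeomorphic, i2.
Qed.

Lemma segment_inhabited (A B : LO) (HA : is_ordinal A) (b : A) :
  nonzero B -> ord_iso B (segment A b) -> exists a, lt a b.
Proof. intros [x] [f _]. destruct (f x) as [y hy]. eauto. Qed.

Lemma model_of_valid c : valid c -> (forall n, c <> Fam1 n) -> exists M, ord_iso (space c) (mspace M).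
Proof.
  intros vc hc. destruct c as [n|k A|k A|k A B].
  - destruct (hc n eq_refl).
  - destruct vc as [hk [HA nA]]. exists (model2 A HA nA k hk). apply space2_iso.
  - destruct vc as [hk [HA nA]]. exists (model3 A HA nA k hk). apply space3_iso.
  - destruct vc as [hk [HA [nA [HB [_ [b hb]]]]]]. exists (model4 A HA nA k b hk). apply space4_iso; auto.
Qed.

Lemma fin_not_homeo_model n c : valid c -> (forall m, c <> Fam1 m) -> ~ homeomorphic (fin n) (space c).
Proof.
  intros vc hc H. destruct (model_of_valid c vc hc) as [M hM].
  apply (mspace_infinite M). apply (finite_type_homeo (fin n)); [|apply fin_finite].
  apply (homeo_trans _ _ _ H), iso_homeomorphic, hM.
Qed.

Lemma fin_homeo_eq n m : homeomorphic (fin n) (fin m) -> n = m.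
Proof.
  intros [f [g [gf [fg _]]]].
  apply (has_card_unique (fin m) (fun _ => True)); [|apply fin_has_card].
  apply (has_card_bij (fin n) (fin m) f g gf fg (fun _ => True) n (fin_has_card n)).
Qed.

Lemma fam2_fam3_not_homeo k A k' A' : valid (Fam2 k A) -> valid (Fam3 k' A') ->
  ~ homeomorphic (space (Fam2 k A)) (space (Fam3 k' A')).
Proof.
  intros [hk [HA nA]] [hk' [HA' nA']] H.
  apply (model3_not_compact A' HA' nA' k' hk').
  apply (compact_transfer (model2 A HA nA k hk)); [|apply model2_compact].
  exact (homeo_of_isos _ _ _ _ (space2_iso A HA nA k hk) (space3_iso A' HA' nA' k' hk') H).
Qed.

Lemma fam2_fam4_not_homeo k A k' A' B' : valid (Fam2 k A) -> valid (Fam4 k' A' B') ->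
  ~ homeomorphic (space (Fam2 k A)) (space (Fam4 k' A' B')).
Proof.
  intros [hk [HA nA]] [hk' [HA' [nA' [HB' [nB' [b' hb']]]]]] H.
  apply (model4_not_compact A' HA' nA' k' b' hk' (segment_inhabited A' B' HA' b' nB' hb')).
  apply (compact_transfer (model2 A HA nA k hk)); [|apply model2_compact].
  exact (homeo_of_isos _ _ _ _ (space2_iso A HA nA k hk) (space4_iso A' HA' nA' k' B' HB' b' hk' hb') H).
Qed.

Lemma model3_one_unbounded A HA nA hk (x : mspace (model3 A HA nA 1 hk)) :
  ~ upper_bounded (model3 A HA nA 1 hk) (mrank _ x).
Proof.
  destruct (mrank _ x) as [a|] eqn:E; [apply model3_some_unbounded|].
  destruct (model3_one_no_top A HA nA hk). exists x. exact E.
Qed.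

Lemma fam3_one_not_homeo_top A (M : model) (HA : is_ordinal A) (nA : nonzero A) (hk : 1 <= 1) :
  has_top M -> upper_bounded M None -> ~ homeomorphic (space (Fam3 1 A)) (mspace M).
Proof.
  intros [x hx] hb H. apply homeo_sym in H.
  destruct (upper_bounded_exists_transfer M (model3 A HA nA 1 hk)) as [y hy].
  - exact (homeo_of_isos _ _ _ _ (iso_refl _) (space3_iso A HA nA 1 hk) H).
  - exists x. rewrite hx. exact hb.
  - exact (model3_one_unbounded A HA nA hk y hy).
Qed.

Lemma fam3_fam4_not_homeo k A k' A' B' : valid (Fam3 k A) -> valid (Fam4 k' A' B') ->
  ~ homeomorphic (space (Fam3 k A)) (space (Fam4 k' A' B')).
Proof.
  intros [hk [HA nA]] [hk' [HA' [nA' [HB' [nB' [b' hb']]]]]] H.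
  set (M4 := model4 A' HA' nA' k' b' hk').
  assert (H' := homeo_of_isos _ _ _ _ (space3_iso A HA nA k hk) (space4_iso A' HA' nA' k' B' HB' b' hk' hb') H).
  destruct (Nat.eq_dec k 1) as [e|e]; [subst k|].
  - apply (fam3_one_not_homeo_top A M4 HA nA hk (model4_has_top A' HA' nA' k' b' hk') (model4_top_bounded A' HA' nA' k' b' hk')).
    exact (homeo_of_isos _ _ _ _ (iso_refl _) (space4_iso A' HA' nA' k' B' HB' b' hk' hb') H).
  - destruct (some_upper_bounded_exists_transfer M4 (model3 A HA nA k hk) (homeo_sym _ _ H')) with b' as [a ha].
    + split; intros _; [apply model3_has_top; lia|apply model4_has_top].
    + apply model4_threshold.
    + exact (model3_some_unbounded A HA nA k hk a ha).
Qed.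

Lemma fam3_unique k A k' A' : valid (Fam3 k A) -> valid (Fam3 k' A') ->
  homeomorphic (space (Fam3 k A)) (space (Fam3 k' A')) -> k = k' /\ ord_iso A A'.
Proof.
  intros [hk [HA nA]] [hk' [HA' nA']] H.
  set (M := model3 A HA nA k hk). set (M' := model3 A' HA' nA' k' hk').
  assert (HM := homeo_of_isos _ _ _ _ (space3_iso A HA nA k hk) (space3_iso A' HA' nA' k' hk') H).
  destruct (Nat.eq_dec k 1) as [e|e]; destruct (Nat.eq_dec k' 1) as [e'|e'].
  - subst k k'. split; auto. apply (base_iso_transfer M M' HM).
    split; intro t; [destruct (model3_one_no_top A HA nA hk t)|destruct (model3_one_no_top A' HA' nA' hk' t)].
  - subst k. exfalso. apply (fam3_one_not_homeo_top A M' HA nA hk).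
    + apply model3_has_top. lia.
    + apply model3_top_bounded.
    + exact (homeo_of_isos _ _ _ _ (iso_refl _) (space3_iso A' HA' nA' k' hk') H).
  - subst k'. exfalso. apply (fam3_one_not_homeo_top A' M HA' nA' hk').
    + apply model3_has_top. lia.
    + apply model3_top_bounded.
    + exact (homeo_of_isos _ _ _ _ (iso_refl _) (space3_iso A HA nA k hk) (homeo_sym _ _ H)).
  - assert (t : has_top M) by (apply model3_has_top; lia).
    assert (t' : has_top M') by (apply model3_has_top; lia).
    split; [|apply (base_iso_transfer M M' HM); tauto].
    pose proof (top_card_eq M M' HM t t' _ _ (model3_top_card A HA nA k hk) (model3_top_card A' HA' nA' k' hk')).
    lia.
Qed.

Lemma fam2_unique k A k' A' : valid (Fam2 k A) -> valid (Fam2 k' A') ->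
  homeomorphic (space (Fam2 k A)) (space (Fam2 k' A')) -> k = k' /\ ord_iso A A'.
Proof.
  intros [hk [HA nA]] [hk' [HA' nA']] H.
  set (M := model2 A HA nA k hk). set (M' := model2 A' HA' nA' k' hk').
  assert (HM := homeo_of_isos _ _ _ _ (space2_iso A HA nA k hk) (space2_iso A' HA' nA' k' hk') H).
  pose proof (model2_has_top A HA nA k hk) as t. pose proof (model2_has_top A' HA' nA' k' hk') as t'.
  split; [|apply (base_iso_transfer M M' HM); tauto].
  exact (top_card_eq M M' HM t t' _ _ (model2_top_card A HA nA k hk) (model2_top_card A' HA' nA' k' hk')).
Qed.

Lemma fam4_unique k A B k' A' B' : valid (Fam4 k A B) -> valid (Fam4 k' A' B') ->
  homeomorphic (space (Fam4 k A B)) (space (Fam4 k' A' B')) -> k = k' /\ ord_iso A A' /\ ord_iso B B'.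
Proof.
  intros [hk [HA [nA [HB [nB [b hb]]]]]] [hk' [HA' [nA' [HB' [nB' [b' hb']]]]]] H.
  set (M := model4 A HA nA k b hk). set (M' := model4 A' HA' nA' k' b' hk').
  assert (HM := homeo_of_isos _ _ _ _ (space4_iso A HA nA k B HB b hk hb) (space4_iso A' HA' nA' k' B' HB' b' hk' hb') H).
  pose proof (model4_has_top A HA nA k b hk) as t. pose proof (model4_has_top A' HA' nA' k' b' hk') as t'.
  assert (htop : has_top M <-> has_top M') by tauto.
  split; [exact (top_card_eq M M' HM t t' _ _ (model4_top_card A HA nA k b hk) (model4_top_card A' HA' nA' k' b' hk'))|].
  split; [exact (base_iso_transfer M M' HM htop)|].
  apply (iso_trans hb). apply (iso_trans (threshold_segment_iso M M' HM htop b b'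
    (model4_threshold A HA nA k b hk) (model4_threshold A' HA' nA' k' b' hk'))).
  apply iso_sym, hb'.
Qed.

Theorem uniqueness (c d : code) : valid c -> valid d -> homeomorphic (space c) (space d) -> same_params c d.
Proof.
  intros vc vd H.
  destruct c as [n|k A|k A|k A B]; destruct d as [n'|k' A'|k' A'|k' A' B']; simpl;
    try (exfalso; apply (fin_not_homeo_model n _ vd); [discriminate|exact H]);
    try (exfalso; apply (fin_not_homeo_model n' _ vc); [discriminate|exact (homeo_sym _ _ H)]).
  - exact (fin_homeo_eq n n' H).
  - exact (fam2_unique k A k' A' vc vd H).
  - exact (fam2_fam3_not_homeo k A k' A' vc vd H).
  - exact (fam2_fam4_not_homeo k A k' A' B' vc vd H).
  - exact (fam2_fam3_not_homeo k' A' k A vd vc (homeo_sym _ _ H)).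
  - exact (fam3_unique k A k' A' vc vd H).
  - exact (fam3_fam4_not_homeo k A k' A' B' vc vd H).
  - exact (fam2_fam4_not_homeo k' A' k A B vd vc (homeo_sym _ _ H)).
  - exact (fam3_fam4_not_homeo k' A' k A B vd vc (homeo_sym _ _ H)).
  - exact (fam4_unique k A B k' A' B' vc vd H).
Qed.

Theorem theorem27 :
  (forall G : LO, is_ordinal G ->
     exists c : code, valid c /\ homeomorphic G (space c)) /\
  (forall c d : code, valid c -> valid d ->
     homeomorphic (space c) (space d) -> same_params c d).
Proof.
  split.
  - exact existence.
  - exact uniqueness.
Qed.
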